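(* Let $\gamma(s)$ be an arc-length parametrized triharmonic curve with vanishing torsion immersed in a BCV space $M(a,b)$ with $4a\neq b^2$. Then either $\gamma$ is a geodesic, or $\gamma$ is a Frenet helix whose constant curvature $\kappa_o$ satisfies $$\kappa_o^2=2\left(\frac{b^2}{4}+\left[4a-b^2\right]B_3^2\right),$$ where $B_3=\langle B,E_3\rangle$ is constant along $\gamma$ and satisfies $B_3^2<\dfrac{b^2}{4(b^2-4a)}$ if $b^2>4a$, and $B_3\neq 0$ if $b^2<4a$. In particular, there are no proper triharmonic curves with vanishing torsion in the product space $\mathbb{H}^2(4a)\times\mathbb{R}$ (i.e. $M(a,0)$ with $a<0$).
   Context: For real $a,b$, the BCV space $M(a,b)$ is $\{(x,y,z)\in\mathbb{R}^3:\lambda_a=1+a(x^2+y^2)>0\}$ with the metric $$g_{a,b}=\frac{dx^2+dy^2}{[1+a(x^2+y^2)]^2}+\left(dz+\frac{b}{2}\,\frac{y\,dx-x\,dy}{1+a(x^2+y^2)}\right)^2,$$ with orthonormal frame $E_1=\lambda_a\partial_x-\frac{by}{2}\partial_z$, $E_2=\lambda_a\partial_y+\frac{bx}{2}\partial_z$, $E_3=\partial_z$. For an arc-length parametrized curve $\gamma$ with $T=\gamma'$ in a Riemannian manifold with Levi-Civita connection $\nabla$ and curvature tensor $R^M(X,Y)=\nabla_X\nabla_Y-\nabla_Y\nabla_X-\nabla_{[X,Y]}$, $\gamma$ is triharmonic if $\nabla_T^5T+R^M(\nabla_T^3T,T)T-R^M(\nabla_T^2T,\nabla_TT)T=0$;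 proper means not a geodesic. For a non-geodesic curve, the Frenet frame $\{T,N,B\}$ (with $B=T\times N$), curvature $\kappa$ and torsion $\tau$ are given by $\nabla_TT=\kappa N$, $\nabla_TN=-\kappa T+\tau B$, $\nabla_TB=-\tau N$. A Frenet helix is a curve with constant curvature and constant torsion. *)

From Stdlib Require Import Reals Lra Arith.
From Coquelicot Require Import Coquelicot.
Open Scope R_scope.

(** Points of R^3 and (coordinate) tangent vectors are represented as
    functions [nat -> R]; only the indices 0,1,2 (x,y,z) are ever used. *)
Definition vec := nat -> R.

Definition sum3 (f : nat -> R) : R := f 0%nat + f 1%nat + f 2%nat.

Definition lam (a : R) (p : vec) : R := 1 + a * (p 0%nat ^ 2 + p 1%nat ^ 2).

Definition inBCV (a : R) (p : vec) : Prop := 0 < lam a p.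

(** Coordinate components g_ij of
    g = (dx^2+dy^2)/lam^2 + (dz + (b/2) (y dx - x dy)/lam)^2.
    Write omega = dz + w_0 dx + w_1 dy with w_0 = b y/(2 lam), w_1 = - b x/(2 lam). *)
Definition omc (a b : R) (i : nat) (p : vec) : R :=
  match i with
  | 0%nat => b / 2 * p 1%nat / lam a p
  | 1%nat => - (b / 2 * p 0%nat / lam a p)
  | _ => 1
  end.

Definition flatc (a : R) (i j : nat) (p : vec) : R :=
  match i, j with
  | 0%nat, 0%nat => / (lam a p ^ 2)
  | 1%nat, 1%nat => / (lam a p ^ 2)
  | _, _ => 0
  end.

Definition gm (a b : R) (i j : nat) (p : vec) : R :=
  flatc a i j p + omc a b i p * omc a b j p.

Definition m3 (m : nat -> nat -> R) (i j : nat) : R := m (i mod 3)%nat (j mod 3)%nat.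
Definition cof3 (m : nat -> nat -> R) (i j : nat) : R :=
  m3 m (i+1) (j+1) * m3 m (i+2) (j+2) - m3 m (i+1) (j+2) * m3 m (i+2) (j+1).
Definition det3 (m : nat -> nat -> R) : R := sum3 (fun j => m 0%nat j * cof3 m 0%nat j).
Definition inv3 (m : nat -> nat -> R) (i j : nat) : R := cof3 m j i / det3 m.

Definition ginv (a b : R) (i j : nat) (p : vec) : R :=
  inv3 (fun k l => gm a b k l p) i j.

Definition pd (k : nat) (f : vec -> R) (p : vec) : R :=
  Derive (fun t => f (fun i => if Nat.eqb i k then p i + t else p i)) 0.

(** Christoffel symbols of the Levi-Civita connection:
    nabla_{d_i} d_j = sum_k Gam k i j d_k *)
Definition Gam (a b : R) (k i j : nat) (p : vec) : R :=
  / 2 * sum3 (fun l => ginv a b k l p *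
     (pd i (gm a b j l) p + pd j (gm a b i l) p - pd l (gm a b i j) p)).

(** Curvature R(d_i,d_j) d_k = sum_l Rc l i j k d_l, with the convention
    R(X,Y) = nabla_X nabla_Y - nabla_Y nabla_X - nabla_[X,Y]. *)
Definition Rc (a b : R) (l i j k : nat) (p : vec) : R :=
  pd i (Gam a b l j k) p - pd j (Gam a b l i k) p
  + sum3 (fun m => Gam a b m j k p * Gam a b l i m p - Gam a b m i k p * Gam a b l j m p).

Definition Rm (a b : R) (p : vec) (X Y Z : vec) : vec :=
  fun l => sum3 (fun i => sum3 (fun j => sum3 (fun k =>
             X i * Y j * Z k * Rc a b l i j k p))).

Definition inner (a b : R) (p : vec) (X Y : vec) : R :=
  sum3 (fun i => sum3 (fun j => gm a b i j p * X i * Y j)).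

Definition vel (gam : R -> vec) : R -> vec := fun s i => Derive (fun t => gam t i) s.

Definition cov (a b : R) (gam : R -> vec) (W : R -> vec) : R -> vec :=
  fun s k => Derive (fun t => W t k) s
    + sum3 (fun i => sum3 (fun j => Gam a b k i j (gam s) * vel gam s i * W s j)).

Definition nabT (a b : R) (gam : R -> vec) (n : nat) : R -> vec :=
  Nat.iter n (cov a b gam) (vel gam).

(** Frame components w.r.t. E1 = lam d_x - (b y/2) d_z, E2 = lam d_y + (b x/2) d_z,
    E3 = d_z, and back. *)
Definition toframe (a b : R) (p : vec) (X : vec) : vec :=
  fun i => match i with
  | 0%nat => X 0%nat / lam a p
  | 1%nat => X 1%nat / lam a p
  | _ => X 2%nat + b * p 1%nat / 2 * (X 0%nat / lam a p) - b * p 0%nat / 2 * (X 1%nat / lam a p)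
  end.
Definition fromframe (a b : R) (p : vec) (c : vec) : vec :=
  fun i => match i with
  | 0%nat => lam a p * c 0%nat
  | 1%nat => lam a p * c 1%nat
  | _ => - (b * p 1%nat / 2) * c 0%nat + b * p 0%nat / 2 * c 1%nat + c 2%nat
  end.

(** cross product X x Y (orientation given by the orthonormal frame E1,E2,E3) *)
Definition cross (a b : R) (p : vec) (X Y : vec) : vec :=
  let u := toframe a b p X in let v := toframe a b p Y in
  fromframe a b p (fun i => match i with
    | 0%nat => u 1%nat * v 2%nat - u 2%nat * v 1%nat
    | 1%nat => u 2%nat * v 0%nat - u 0%nat * v 2%nat
    | _ => u 0%nat * v 1%nat - u 1%nat * v 0%nat
    end).

Definition E3 : vec := fun i => if Nat.eqb i 2 then 1 else 0.

Definition curv (a b : R) (gam : R -> vec) (s : R) : R :=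
  sqrt (inner a b (gam s) (nabT a b gam 1 s) (nabT a b gam 1 s)).
Definition frN (a b : R) (gam : R -> vec) : R -> vec :=
  fun s i => nabT a b gam 1 s i / curv a b gam s.
Definition frB (a b : R) (gam : R -> vec) : R -> vec :=
  fun s => cross a b (gam s) (vel gam s) (frN a b gam s).
Definition tors (a b : R) (gam : R -> vec) (s : R) : R :=
  inner a b (gam s) (cov a b gam (frN a b gam) s) (frB a b gam s).
Definition B3 (a b : R) (gam : R -> vec) (s : R) : R :=
  inner a b (gam s) (frB a b gam s) E3.

Definition inI (lo hi : Rbar) (s : R) : Prop := Rbar_lt lo s /\ Rbar_lt s hi.

Definition arclength_curve (a b : R) (lo hi : Rbar) (gam : R -> vec) : Prop :=
  Rbar_lt lo hi /\
  (forall s, inI lo hi s -> inBCV a (gam s)) /\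
  (forall i n s, (i < 3)%nat -> inI lo hi s -> ex_derive_n (fun t => gam t i) n s) /\
  (forall s, inI lo hi s -> inner a b (gam s) (vel gam s) (vel gam s) = 1).

Definition triharmonic (a b : R) (lo hi : Rbar) (gam : R -> vec) : Prop :=
  forall s, inI lo hi s -> forall l, (l < 3)%nat ->
    nabT a b gam 5 s l
    + Rm a b (gam s) (nabT a b gam 3 s) (vel gam s) (vel gam s) l
    - Rm a b (gam s) (nabT a b gam 2 s) (nabT a b gam 1 s) (vel gam s) l = 0.

(** vanishing torsion: tau = 0 wherever the Frenet frame is defined (kappa <> 0) *)
Definition zero_torsion (a b : R) (lo hi : Rbar) (gam : R -> vec) : Prop :=
  forall s, inI lo hi s -> curv a b gam s <> 0 -> tors a b gam s = 0.

Definition geodesic (a b : R) (lo hi : Rbar) (gam : R -> vec) : Prop :=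
  forall s, inI lo hi s -> forall l, (l < 3)%nat -> nabT a b gam 1 s l = 0.

From Stdlib Require Import Reals Lra Lia Classical.
From Coquelicot Require Import Coquelicot.
Open Scope R_scope.

(* In the orthonormal frame E1, E2, E3 the Levi-Civita connection along a curve is
   nabla_T W = W' + rot x W, and the curvature is
   R(u,v)w = b^2/4 (<v,w>u - <u,w>v) + (4a - b^2) (<v',w'>u' - <u',w'>v'),
   where u' is the horizontal part of u.  For a torsion-free curve with kappa > 0 the
   Frenet equations give nabla_T^n T = alpha_n T + beta_n N, so the triharmonic equation
   splits into a T-, an N- and a B-equation.  The B-equation forces N3 B3 = 0, and as
   B3' = (b/2) N3, B3 is constant.  The T-equation has the first integral
   C = kappa kappa'' + kappa'^2/2 - kappa^4/2.  Eliminating the higher derivatives of kappa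
   turns the N-equation into a polynomial relation between kappa and kappa'^2; its
   derivative expresses kappa'^2 through kappa, and substituting back gives a quintic in
   kappa^2 that vanishes along the curve.  Where kappa' <> 0 this quintic has a continuum of
   roots, which is impossible; so kappa is constant and the N-equation becomes
   kappa^2 = 2 (b^2/4 + (4a - b^2) B3^2).  Finally kappa^2 has zero derivative everywhere
   (locally constant where kappa <> 0, minimal where kappa = 0), so kappa vanishes either
   identically or nowhere. *)

(** * Christoffel symbols and curvature in coordinates *)

Definition shift (k : nat) (p : vec) (t : R) : vec :=
  fun i => if Nat.eqb i k then p i + t else p i.

Lemma locally_neq0 (f : R -> R) x : continuous f x -> f x <> 0 ->
  locally x (fun t => f t <> 0).
Proof. intros Hc Hn. exact (Hc _ (open_neq 0 (f x) Hn)). Qed.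

Definition Gam_bcv (a b : R) (k i j : nat) (p : vec) : R :=
  let x := p 0%nat in let y := p 1%nat in let L := lam a p in
  match k, i, j with
  | 0%nat, 0%nat, 0%nat => -2 * a * x / L
  | 0%nat, 0%nat, 1%nat | 0%nat, 1%nat, 0%nat => (-2 * a + b^2/4) * y / L
  | 0%nat, 1%nat, 1%nat => (2 * a - b^2/2) * x / L
  | 0%nat, 1%nat, 2%nat | 0%nat, 2%nat, 1%nat => b / 2
  | 1%nat, 0%nat, 0%nat => (2 * a - b^2/2) * y / L
  | 1%nat, 0%nat, 1%nat | 1%nat, 1%nat, 0%nat => (-2 * a + b^2/4) * x / L
  | 1%nat, 0%nat, 2%nat | 1%nat, 2%nat, 0%nat => - (b / 2)
  | 1%nat, 1%nat, 1%nat => -2 * a * y / L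
  | 2%nat, 0%nat, 0%nat => x * y * b * (a - b^2/4) / L^2
  | 2%nat, 0%nat, 1%nat | 2%nat, 1%nat, 0%nat => b / 2 * (a - b^2/4) * (y^2 - x^2) / L^2
  | 2%nat, 0%nat, 2%nat | 2%nat, 2%nat, 0%nat => - (b^2 * x / 4 / L)
  | 2%nat, 1%nat, 1%nat => - (x * y * b * (a - b^2/4) / L^2)
  | 2%nat, 1%nat, 2%nat | 2%nat, 2%nat, 1%nat => - (b^2 * y / 4 / L)
  | _, _, _ => 0
  end.

Ltac neq0_lam Hl :=
  match goal with |- ?X <> 0 =>
    first [ assert (X = lam _ _) as -> by (unfold lam; simpl; ring); exact Hl
          | apply Rmult_integral_contrapositive_currified; neq0_lam Hl
          | apply pow_nonzero; neq0_lam Hl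
          | apply Rinv_neq_0_compat; neq0_lam Hl
          | lra ]
  end.

(* Evaluates the first [pd k f p] of the goal with [auto_derive]. *)
Ltac eval_pd Hl :=
  match goal with |- context[pd ?k ?f ?p] =>
    let e := fresh "e" in evar (e : R);
    let H := fresh in assert (H : pd k f p = e);
    [ unfold pd, Gam_bcv, gm, flatc, omc; unfold lam; simpl; apply is_derive_unique; auto_derive;
      [ repeat split; try neq0_lam Hl | subst e; reflexivity ] | ];
    subst e; rewrite H; clear H
  end.

Lemma det_gm a b p : lam a p <> 0 -> det3 (fun k l => gm a b k l p) = / (lam a p ^ 4).
Proof.
  intros Hl. unfold det3, cof3, m3, sum3, gm, flatc, omc; simpl. unfold lam in *. field; auto.
Qed.

Lemma ginv_bcv a b p : lam a p <> 0 -> forall k l, (k < 3)%nat -> (l < 3)%nat ->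
  ginv a b k l p = match k, l with
   | 0, 0 => lam a p ^ 2 | 1, 1 => lam a p ^2
   | 0, 2 | 2, 0 => - (lam a p * b * p 1%nat / 2)
   | 1, 2 | 2, 1 => lam a p * b * p 0%nat / 2
   | 2, 2 => 1 + b^2 * (p 0%nat ^2 + p 1%nat ^2) / 4
   | _, _ => 0 end.
Proof.
  intros Hl k l Hk Hl'.
  unfold ginv, inv3. rewrite det_gm by auto.
  unfold cof3, m3, gm, flatc, omc.
  destruct k as [|[|[|k]]]; try lia; destruct l as [|[|[|l]]]; try lia; simpl;
  unfold lam in *; field; auto.
Qed.

Lemma Gam_bcvE a b p : lam a p <> 0 -> forall k i j, (k < 3)%nat -> (i < 3)%nat -> (j < 3)%nat ->
  Gam a b k i j p = Gam_bcv a b k i j p.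
Proof.
  intros Hl k i j Hk Hi Hj.
  unfold Gam, sum3.
  rewrite !ginv_bcv by (auto; lia).
  destruct k as [|[|[|k]]]; try lia; destruct i as [|[|[|i]]]; try lia;
  destruct j as [|[|[|j]]]; try lia;
  repeat eval_pd Hl; unfold Gam_bcv, lam in *; simpl; field; auto.
  all: let Hz := fresh in intro Hz; apply Hl; rewrite <- Hz; ring.
Qed.

Lemma locally_lam_shift_neq0 a p i : lam a p <> 0 -> locally 0 (fun t => lam a (shift i p t) <> 0).
Proof.
  intros Hl. apply (locally_neq0 (fun t => lam a (shift i p t)) 0).
  - apply (@ex_derive_continuous R_AbsRing R_NormedModule).
    unfold lam, shift; destruct i as [|[|i]]; simpl; auto_derive; auto.
  - unfold lam, shift in *; destruct i as [|[|i]]; simpl; rewrite ?Rplus_0_r; auto.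
Qed.

Lemma pd_Gam a b p i l j k : lam a p <> 0 -> (l < 3)%nat -> (j < 3)%nat -> (k < 3)%nat ->
  pd i (Gam a b l j k) p = pd i (Gam_bcv a b l j k) p.
Proof.
  intros Hl Hl' Hj Hk. unfold pd. apply Derive_ext_loc.
  eapply filter_imp; [|apply (locally_lam_shift_neq0 a p i Hl)].
  intros t Ht. apply Gam_bcvE; auto.
Qed.

Definition kron (l i : nat) : R := if Nat.eqb l i then 1 else 0.

Definition Rc_bcv (a b : R) (l i j k : nat) (p : vec) : R :=
  b^2/4 * (gm a b j k p * kron l i - gm a b i k p * kron l j)
  + (4*a - b^2) * (flatc a j k p * (kron l i - omc a b i p * kron l 2)
                   - flatc a i k p * (kron l j - omc a b j p * kron l 2)).

Lemma Rc_bcvE a b p : lam a p <> 0 ->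
  forall l i j k, (l < 3)%nat -> (i < 3)%nat -> (j < 3)%nat -> (k < 3)%nat ->
  Rc a b l i j k p = Rc_bcv a b l i j k p.
Proof.
  intros Hl l i j k Hl' Hi Hj Hk.
  unfold Rc, sum3.
  rewrite !pd_Gam by (auto; lia).
  rewrite !Gam_bcvE by (auto; lia).
  destruct l as [|[|[|l]]]; try lia; destruct i as [|[|[|i]]]; try lia;
  destruct j as [|[|[|j]]]; try lia; destruct k as [|[|[|k]]]; try lia;
  repeat eval_pd Hl; unfold Rc_bcv, kron, Gam_bcv, gm, flatc, omc in *; unfold lam in *; simpl;
  field; auto.
  all: let Hz := fresh in intro Hz; apply Hl; rewrite <- Hz; ring.
Qed.

(** * The orthonormal frame *)

Definition mk3 (u0 u1 u2 : R) : vec :=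
  fun i => match i with 0%nat => u0 | 1%nat => u1 | _ => u2 end.
Definition dot (u v : vec) : R := u 0%nat * v 0%nat + u 1%nat * v 1%nat + u 2%nat * v 2%nat.
Definition crs (u v : vec) : vec :=
  mk3 (u 1%nat * v 2%nat - u 2%nat * v 1%nat) (u 2%nat * v 0%nat - u 0%nat * v 2%nat)
      (u 0%nat * v 1%nat - u 1%nat * v 0%nat).
Definition hor (u : vec) : vec := mk3 (u 0%nat) (u 1%nat) 0.

Definition Rfr (a b : R) (u v w : vec) : vec := fun i =>
  b^2/4 * (dot v w * u i - dot u w * v i)
  + (4*a - b^2) * (dot (hor v) (hor w) * hor u i - dot (hor u) (hor w) * hor v i).

(* In the frame, [nabla_T W = W' + rot p t x W] where [t] are the frame
   components of [T] at the point [p]: the frame rotates along the curve. *)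
Definition rot (a b : R) (p t : vec) : vec :=
  mk3 (b/2 * t 0%nat) (b/2 * t 1%nat)
      (- (-2 * a * p 1%nat * t 0%nat + 2 * a * p 0%nat * t 1%nat + b/2 * t 2%nat)).
Definition covfr (a b : R) (p t w dw : vec) : vec := fun i => dw i + crs (rot a b p t) w i.

Lemma inner_toframe a b p X Y : lam a p <> 0 ->
  inner a b p X Y = dot (toframe a b p X) (toframe a b p Y).
Proof. intros Hl. unfold inner, dot, sum3, toframe, gm, flatc, omc; simpl. field. auto. Qed.

Lemma toframe_fromframe a b p c i : lam a p <> 0 -> (i < 3)%nat ->
  toframe a b p (fromframe a b p c) i = c i.
Proof.
  intros Hl Hi. destruct i as [|[|[|i]]]; try lia; unfold toframe, fromframe; simpl; field; auto.
Qed.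

Lemma fromframe_toframe a b p X i : lam a p <> 0 -> (i < 3)%nat ->
  fromframe a b p (toframe a b p X) i = X i.
Proof.
  intros Hl Hi. destruct i as [|[|[|i]]]; try lia; unfold toframe, fromframe; simpl; field; auto.
Qed.

Lemma fromframe_ext a b p X Y k : (forall i, (i < 3)%nat -> X i = Y i) ->
  fromframe a b p X k = fromframe a b p Y k.
Proof. intros H. unfold fromframe. rewrite !H by lia. reflexivity. Qed.

Lemma toframe_cross a b p X Y i : lam a p <> 0 -> (i < 3)%nat ->
  toframe a b p (cross a b p X Y) i = crs (toframe a b p X) (toframe a b p Y) i.
Proof.
  intros Hl Hi. unfold cross. rewrite toframe_fromframe by auto.
  destruct i as [|[|[|i]]]; try lia; reflexivity.
Qed.

Lemma toframe_Rm a b p X Y Z i : lam a p <> 0 -> (i < 3)%nat ->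
  toframe a b p (Rm a b p X Y Z) i = Rfr a b (toframe a b p X) (toframe a b p Y) (toframe a b p Z) i.
Proof.
  intros Hl Hi.
  destruct i as [|[|[|i]]]; try lia; unfold toframe, Rm, sum3; simpl;
  rewrite !Rc_bcvE by (auto; lia);
  unfold Rc_bcv, kron, Rfr, dot, hor, mk3, gm, flatc, omc; simpl; unfold lam in *; field; auto.
Qed.

Definition dvec (w : R -> vec) (s : R) : vec := fun i => Derive (fun u => w u i) s.

Ltac eta_D := repeat match goal with
  |- context [Derive (fun x => ?f x) ?s] => change (Derive (fun x => f x) s) with (Derive f s) end.

Lemma is_derive_dot (u0 u1 u2 v0 v1 v2 : R -> R) s :
  ex_derive u0 s -> ex_derive u1 s -> ex_derive u2 s ->
  ex_derive v0 s -> ex_derive v1 s -> ex_derive v2 s ->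
  is_derive (fun r => u0 r * v0 r + u1 r * v1 r + u2 r * v2 r) s
    ((Derive u0 s * v0 s + Derive u1 s * v1 s + Derive u2 s * v2 s)
     + (u0 s * Derive v0 s + u1 s * Derive v1 s + u2 s * Derive v2 s)).
Proof. intros; auto_derive; [repeat split; auto | eta_D; ring]. Qed.

Lemma Derive_dot (u v : R -> vec) s :
  (forall i, (i < 3)%nat -> ex_derive (fun r => u r i) s) ->
  (forall i, (i < 3)%nat -> ex_derive (fun r => v r i) s) ->
  Derive (fun r => dot (u r) (v r)) s = dot (dvec u s) (v s) + dot (u s) (dvec v s).
Proof.
  intros Hu Hv. apply is_derive_unique.
  exact (is_derive_dot (fun r => u r 0%nat) (fun r => u r 1%nat) (fun r => u r 2%nat)
    (fun r => v r 0%nat) (fun r => v r 1%nat) (fun r => v r 2%nat) s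
    (Hu 0%nat ltac:(lia)) (Hu 1%nat ltac:(lia)) (Hu 2%nat ltac:(lia))
    (Hv 0%nat ltac:(lia)) (Hv 1%nat ltac:(lia)) (Hv 2%nat ltac:(lia))).
Qed.

Lemma is_derive_det2 (x0 x1 y0 y1 : R -> R) s :
  ex_derive x0 s -> ex_derive x1 s -> ex_derive y0 s -> ex_derive y1 s ->
  is_derive (fun r => x0 r * y1 r - x1 r * y0 r) s
    ((Derive x0 s * y1 s + x0 s * Derive y1 s) - (Derive x1 s * y0 s + x1 s * Derive y0 s)).
Proof. intros; auto_derive; [repeat split; auto | eta_D; ring]. Qed.

(* The derivative of [u |-> fromframe (G u) (w u)], [dp] and [dc] being the
   derivatives of [p = G s] and [c = w s]. *)
Definition fromframe_deriv (a b : R) (p dp c dc : vec) : vec :=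
  mk3 (2*a*(p 0%nat * dp 0%nat + p 1%nat * dp 1%nat) * c 0%nat + lam a p * dc 0%nat)
      (2*a*(p 0%nat * dp 0%nat + p 1%nat * dp 1%nat) * c 1%nat + lam a p * dc 1%nat)
      (- (b * dp 1%nat / 2) * c 0%nat - b * p 1%nat / 2 * dc 0%nat + b * dp 0%nat / 2 * c 1%nat
        + b * p 0%nat / 2 * dc 1%nat + dc 2%nat).

Lemma is_derive_lam_mul a (x y c : R -> R) s :
  ex_derive x s -> ex_derive y s -> ex_derive c s ->
  is_derive (fun u => (1 + a * (x u ^ 2 + y u ^ 2)) * c u) s
    (2*a*(x s * Derive x s + y s * Derive y s) * c s + (1 + a * (x s ^ 2 + y s ^ 2)) * Derive c s).
Proof. intros; auto_derive; [repeat split; auto | eta_D; ring]. Qed.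

Lemma is_derive_fromframe3 b (x y c0 c1 c2 : R -> R) s :
  ex_derive x s -> ex_derive y s -> ex_derive c0 s -> ex_derive c1 s -> ex_derive c2 s ->
  is_derive (fun u => - (b * y u / 2) * c0 u + b * x u / 2 * c1 u + c2 u) s
    (- (b * Derive y s / 2) * c0 s - b * y s / 2 * Derive c0 s + b * Derive x s / 2 * c1 s
     + b * x s / 2 * Derive c1 s + Derive c2 s).
Proof. intros; auto_derive; [repeat split; auto | eta_D; field]. Qed.

Lemma Derive_fromframe a b (G w : R -> vec) s k : (k < 3)%nat ->
  ex_derive (fun u => G u 0%nat) s -> ex_derive (fun u => G u 1%nat) s ->
  (forall i, (i < 3)%nat -> ex_derive (fun u => w u i) s) ->
  Derive (fun u => fromframe a b (G u) (w u) k) s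
  = fromframe_deriv a b (G s) (dvec G s) (w s) (dvec w s) k.
Proof.
  intros Hk Hx Hy Hw. apply is_derive_unique.
  destruct k as [|[|[|k]]]; try lia.
  - exact (is_derive_lam_mul a _ _ (fun u => w u 0%nat) s Hx Hy (Hw 0%nat ltac:(lia))).
  - exact (is_derive_lam_mul a _ _ (fun u => w u 1%nat) s Hx Hy (Hw 1%nat ltac:(lia))).
  - exact (is_derive_fromframe3 b _ _ (fun u => w u 0%nat) (fun u => w u 1%nat) (fun u => w u 2%nat)
             s Hx Hy (Hw 0%nat ltac:(lia)) (Hw 1%nat ltac:(lia)) (Hw 2%nat ltac:(lia))).
Qed.

Lemma toframe_cov a b (gam W w : R -> vec) s :
  lam a (gam s) <> 0 ->
  (forall i, (i < 3)%nat -> ex_derive (fun u => gam u i) s) ->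
  (forall i, (i < 3)%nat -> ex_derive (fun u => w u i) s) ->
  locally s (fun u => forall k, (k < 3)%nat -> W u k = fromframe a b (gam u) (w u) k) ->
  forall k, (k < 3)%nat ->
  toframe a b (gam s) (cov a b gam W s) k =
  covfr a b (gam s) (toframe a b (gam s) (vel gam s)) (w s) (dvec w s) k.
Proof.
  intros Hl Hg Hw Hloc.
  assert (HW : forall k, (k < 3)%nat -> W s k = fromframe a b (gam s) (w s) k)
    by exact (locally_singleton _ _ Hloc).
  assert (Hc : forall k, (k < 3)%nat -> cov a b gam W s k =
     fromframe_deriv a b (gam s) (dvec gam s) (w s) (dvec w s) k +
     sum3 (fun i => sum3 (fun j =>
       Gam_bcv a b k i j (gam s) * vel gam s i * fromframe a b (gam s) (w s) j))).
  { intros k Hk. unfold cov. f_equal.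
    - rewrite <- Derive_fromframe by (auto; try apply Hg; lia).
      apply Derive_ext_loc. eapply filter_imp; [|exact Hloc]. intros u Hu. apply Hu; auto.
    - unfold sum3. rewrite !Gam_bcvE by (auto; lia). rewrite !HW by lia. reflexivity. }
  intros k Hk.
  destruct k as [|[|[|k]]]; try lia; unfold toframe at 1; rewrite ?Hc by lia;
  unfold covfr, crs, rot, fromframe_deriv, mk3, sum3, Gam_bcv, toframe, fromframe, vel, dvec; simpl;
  unfold lam in *; field; auto.
Qed.

Lemma toframe_div a b p X r i : lam a p <> 0 -> r <> 0 -> (i < 3)%nat ->
  toframe a b p (fun k => X k / r) i = toframe a b p X i / r.
Proof. intros Hl Hr Hi. destruct i as [|[|[|i]]]; try lia; unfold toframe; field; auto. Qed.

Lemma fromframe_div a b p c r k : r <> 0 -> (k < 3)%nat ->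
  fromframe a b p (fun i => c i / r) k = fromframe a b p c k / r.
Proof. intros Hr Hk. destruct k as [|[|[|k]]]; try lia; unfold fromframe; field; auto. Qed.

Lemma toframe_add_sub a b p X Y Z i : lam a p <> 0 -> (i < 3)%nat ->
  toframe a b p (fun l => X l + Y l - Z l) i = toframe a b p X i + toframe a b p Y i - toframe a b p Z i.
Proof. intros Hl Hi. destruct i as [|[|[|i]]]; try lia; unfold toframe; field; auto. Qed.

Lemma toframe_eq0 a b p X i : (forall l, (l < 3)%nat -> X l = 0) -> (i < 3)%nat -> toframe a b p X i = 0.
Proof.
  intros H Hi. destruct i as [|[|[|i]]]; try lia; unfold toframe; rewrite ?H by lia; unfold Rdiv; ring.
Qed.

Lemma dot_ext u v u' v' : (forall i, (i < 3)%nat -> u i = u' i) ->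
  (forall i, (i < 3)%nat -> v i = v' i) -> dot u v = dot u' v'.
Proof. intros Hu Hv. unfold dot. rewrite !Hu, !Hv by lia. reflexivity. Qed.

Lemma crs_ext u v u' v' i : (forall i, (i < 3)%nat -> u i = u' i) ->
  (forall i, (i < 3)%nat -> v i = v' i) -> crs u v i = crs u' v' i.
Proof. intros Hu Hv. unfold crs, mk3. rewrite !Hu, !Hv by lia. reflexivity. Qed.

Lemma dot_self_ge0 u : 0 <= dot u u.
Proof. unfold dot. nra. Qed.

Section Orthonormal.
Variables (t n : vec).
Hypotheses (Htt : dot t t = 1) (Hnn : dot n n = 1) (Htn : dot t n = 0).

Lemma crs_orthogonal : dot t (crs t n) = 0 /\ dot n (crs t n) = 0.
Proof. split; unfold dot, crs, mk3; ring. Qed.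

Lemma dot_crs_self : dot (crs t n) (crs t n) = 1.
Proof.
  assert (E : dot (crs t n) (crs t n) = dot t t * dot n n - dot t n ^ 2) by (unfold dot, crs, mk3; ring).
  rewrite E, Htt, Hnn, Htn. ring.
Qed.

Lemma decomp_orthonormal V i : (i < 3)%nat ->
  V i = dot V t * t i + dot V n * n i + dot V (crs t n) * crs t n i.
Proof.
  intros Hi.
  assert (E : dot V t * (t i * dot n n - n i * dot t n) + dot V n * (n i * dot t t - t i * dot t n)
              + dot V (crs t n) * crs t n i = (dot t t * dot n n - dot t n ^ 2) * V i).
  { destruct i as [|[|[|i]]]; try lia; unfold dot, crs, mk3; ring. }
  rewrite Htt, Hnn, Htn in E.
  transitivity ((1 * 1 - 0 ^ 2) * V i); [ring | rewrite <- E; ring].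
Qed.

Lemma orthonormal_comb_eq0 x y z :
  (forall i, (i < 3)%nat -> x * t i + y * n i + z * crs t n i = 0) -> x = 0 /\ y = 0 /\ z = 0.
Proof.
  intros H. destruct crs_orthogonal as [Htb Hnb]. assert (Hbb := dot_crs_self).
  assert (Hdot : forall w, dot (fun i => x * t i + y * n i + z * crs t n i) w = 0)
    by (intros w; unfold dot; rewrite !H by lia; ring).
  assert (Ex : forall w, dot (fun i => x * t i + y * n i + z * crs t n i) w
                         = x * dot t w + y * dot n w + z * dot (crs t n) w)
    by (intros w; unfold dot; ring).
  pose proof (Hdot t) as Et. pose proof (Hdot n) as En. pose proof (Hdot (crs t n)) as Eb.
  rewrite Ex in Et, En, Eb.
  assert (Hnt : dot n t = 0) by (rewrite <- Htn; unfold dot; ring).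
  assert (Hbt : dot (crs t n) t = 0) by (rewrite <- Htb; unfold dot; ring).
  assert (Hbn : dot (crs t n) n = 0) by (rewrite <- Hnb; unfold dot; ring).
  rewrite Htt, Hnt, Hbt in Et. rewrite Htn, Hnn, Hbn in En. rewrite Htb, Hnb, Hbb in Eb.
  lra.
Qed.

Lemma Rfr_NTT a b i : (i < 3)%nat ->
  Rfr a b n t t i = (b^2/4 + (4*a - b^2) * crs t n 2%nat ^ 2) * n i
                    + (- (4*a - b^2) * n 2%nat * crs t n 2%nat) * crs t n i.
Proof.
  intros Hi.
  rewrite (decomp_orthonormal (Rfr a b n t t) i Hi).
  assert (I1 : dot (Rfr a b n t t) t = 0) by (unfold Rfr, dot, hor, mk3; simpl; field).
  assert (I2 : dot (Rfr a b n t t) n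
               = b^2/4 * (dot t t * dot n n - dot t n ^ 2) + (4*a - b^2) * crs t n 2%nat ^ 2)
    by (unfold Rfr, dot, hor, crs, mk3; simpl; field).
  assert (I3 : dot (Rfr a b n t t) (crs t n) = (4*a - b^2) *
      (- dot t t * n 2%nat * crs t n 2%nat + dot t n * t 2%nat * crs t n 2%nat))
    by (unfold Rfr, dot, hor, crs, mk3; simpl; field).
  rewrite I1, I2, I3, Htt, Hnn, Htn. field.
Qed.

End Orthonormal.

Lemma Rfr_ext a b u v w u' v' w' i : (i < 3)%nat ->
  (forall j, (j < 3)%nat -> u j = u' j) -> (forall j, (j < 3)%nat -> v j = v' j) ->
  (forall j, (j < 3)%nat -> w j = w' j) -> Rfr a b u v w i = Rfr a b u' v' w' i.
Proof.
  intros Hi Hu Hv Hw. unfold Rfr, dot, hor, mk3.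
  rewrite !Hu, !Hv, !Hw by lia. destruct i as [|[|[|i]]]; try lia; rewrite ?Hu, ?Hv by lia; reflexivity.
Qed.

Lemma open_inI lo hi : open (inI lo hi).
Proof. exact (open_and _ _ (open_Rbar_gt lo) (open_Rbar_lt hi)). Qed.

(* [Ck n f U]: [f] has [n + 1] derivatives on [U]. *)
Fixpoint Ck (n : nat) (f : R -> R) (U : R -> Prop) : Prop :=
  match n with
  | O => forall s, U s -> ex_derive f s
  | S m => (forall s, U s -> ex_derive f s) /\ Ck m (Derive f) U
  end.

Definition smooth (f : R -> R) (U : R -> Prop) : Prop := forall n, Ck n f U.

Section Ck_calculus.
Variables (U : R -> Prop).
Hypothesis HU : open U.

Lemma Ck_ex_derive n f : Ck n f U -> forall s, U s -> ex_derive f s.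
Proof. destruct n; simpl; tauto. Qed.

Lemma CkS_Ck n f : Ck (S n) f U -> Ck n f U.
Proof.
  revert f; induction n; intros f H; simpl in *.
  - tauto.
  - destruct H as [H1 H2]. split; auto.
Qed.

Lemma Ck_ext n f g : Ck n f U -> (forall s, U s -> f s = g s) -> Ck n g U.
Proof.
  revert f g; induction n; intros f g Hf Hfg; simpl in *.
  - intros s Hs. apply (ex_derive_ext_loc f g); [|auto].
    eapply filter_imp; [|exact (HU s Hs)]. auto.
  - destruct Hf as [H1 H2]. split.
    + intros s Hs. apply (ex_derive_ext_loc f g); [|auto].
      eapply filter_imp; [|exact (HU s Hs)]. auto.
    + apply (IHn (Derive f)); auto. intros s Hs. apply Derive_ext_loc.
      eapply filter_imp; [|exact (HU s Hs)]. auto.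
Qed.

Lemma Ck_const n c : Ck n (fun _ => c) U.
Proof.
  revert c; induction n; intros c; simpl.
  - intros; apply (@ex_derive_const R_AbsRing R_NormedModule).
  - split. intros; apply (@ex_derive_const R_AbsRing R_NormedModule).
    apply (Ck_ext n (fun _ => 0)); auto. intros s Hs. rewrite Derive_const. reflexivity.
Qed.

Lemma Ck_plus n f g : Ck n f U -> Ck n g U -> Ck n (fun s => f s + g s) U.
Proof.
  revert f g; induction n; intros f g Hf Hg; simpl in *.
  - intros s Hs. apply (@ex_derive_plus R_AbsRing R_NormedModule f g); auto.
  - destruct Hf as [Hf1 Hf2]; destruct Hg as [Hg1 Hg2]. split.
    + intros s Hs. apply (@ex_derive_plus R_AbsRing R_NormedModule f g); auto.
    + apply (Ck_ext n (fun s => Derive f s + Derive g s)); auto.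
      intros s Hs. rewrite Derive_plus; auto.
Qed.

Lemma Ck_mult n f g : Ck n f U -> Ck n g U -> Ck n (fun s => f s * g s) U.
Proof.
  revert f g; induction n; intros f g Hf Hg.
  - simpl in *. intros s Hs. apply ex_derive_mult; auto.
  - pose proof (CkS_Ck _ _ Hf) as Hf'. pose proof (CkS_Ck _ _ Hg) as Hg'.
    simpl in Hf, Hg. destruct Hf as [Hf1 Hf2]; destruct Hg as [Hg1 Hg2]. split.
    + intros s Hs. apply ex_derive_mult; auto.
    + apply (Ck_ext n (fun s => Derive f s * g s + f s * Derive g s)).
      * apply Ck_plus; auto.
      * intros s Hs. rewrite Derive_mult; auto.
Qed.

Lemma Ck_opp n f : Ck n f U -> Ck n (fun s => - f s) U.
Proof.
  intros Hf. apply (Ck_ext n (fun s => (-1) * f s)).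
  - apply Ck_mult; auto. apply Ck_const.
  - intros; ring.
Qed.

Lemma Ck_inv n f : Ck n f U -> (forall s, U s -> f s <> 0) -> Ck n (fun s => / f s) U.
Proof.
  revert f; induction n; intros f Hf Hnz.
  - simpl in *. intros s Hs. apply (ex_derive_inv f s); auto.
  - pose proof (CkS_Ck _ _ Hf) as Hf'.
    simpl in Hf. destruct Hf as [Hf1 Hf2]. split.
    + intros s Hs. apply (ex_derive_inv f s); auto.
    + apply (Ck_ext n (fun s => - (Derive f s * (/ f s * / f s)))).
      * apply Ck_opp; auto. apply Ck_mult; auto. apply Ck_mult; auto.
      * intros s Hs. rewrite Derive_inv; auto. field. auto.
Qed.

Lemma Ck_sqrt n f : Ck n f U -> (forall s, U s -> 0 < f s) -> Ck n (fun s => sqrt (f s)) U.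
Proof.
  revert f; induction n; intros f Hf Hp.
  - simpl in *. intros s Hs. pose proof (Hf s Hs). pose proof (Hp s Hs).
    auto_derive; auto.
  - pose proof (CkS_Ck _ _ Hf) as Hf'.
    simpl in Hf. destruct Hf as [Hf1 Hf2].
    assert (Hsq : forall s, U s -> 0 < 2 * sqrt (f s))
      by (intros s Hs; pose proof (sqrt_lt_R0 _ (Hp s Hs)); lra).
    split.
    + intros s Hs. pose proof (Hf1 s Hs). pose proof (Hp s Hs). auto_derive; auto.
    + apply (Ck_ext n (fun s => Derive f s * / (2 * sqrt (f s)))).
      * apply Ck_mult; auto. apply Ck_inv; [|intros s Hs; specialize (Hsq s Hs); lra].
        apply Ck_mult; auto. apply Ck_const.
      * intros s Hs. pose proof (Hf1 s Hs). pose proof (Hp s Hs). pose proof (Hsq s Hs).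
        apply eq_sym, is_derive_unique. auto_derive; auto. eta_D. field. lra.
Qed.

End Ck_calculus.

Section smooth_calculus.
Variables (U : R -> Prop).
Hypothesis HU : open U.

Lemma smooth_ex_derive f s : smooth f U -> U s -> ex_derive f s.
Proof. intros H Hs. exact (Ck_ex_derive U 0 f (H O) s Hs). Qed.

Lemma smooth_Derive f : smooth f U -> smooth (Derive f) U.
Proof. intros H n. exact (proj2 (H (S n))). Qed.

Lemma smooth_ext f g : smooth f U -> (forall s, U s -> f s = g s) -> smooth g U.
Proof. intros H E n. apply (Ck_ext U HU n f); auto. Qed.

Lemma smooth_const c : smooth (fun _ => c) U.
Proof. intros n. apply Ck_const; auto. Qed.

Lemma smooth_plus f g : smooth f U -> smooth g U -> smooth (fun s => f s + g s) U.
Proof. intros Hf Hg n. apply Ck_plus; auto. Qed.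

Lemma smooth_mult f g : smooth f U -> smooth g U -> smooth (fun s => f s * g s) U.
Proof. intros Hf Hg n. apply Ck_mult; auto. Qed.

Lemma smooth_opp f : smooth f U -> smooth (fun s => - f s) U.
Proof. intros Hf n. apply Ck_opp; auto. Qed.

Lemma smooth_minus f g : smooth f U -> smooth g U -> smooth (fun s => f s - g s) U.
Proof. intros Hf Hg. apply smooth_plus; auto. apply smooth_opp; auto. Qed.

Lemma smooth_inv f : smooth f U -> (forall s, U s -> f s <> 0) -> smooth (fun s => / f s) U.
Proof. intros Hf Hn n. apply Ck_inv; auto. Qed.

Lemma smooth_div f g : smooth f U -> smooth g U -> (forall s, U s -> g s <> 0) ->
  smooth (fun s => f s / g s) U.
Proof. intros Hf Hg Hn. apply smooth_mult; auto. apply smooth_inv; auto. Qed.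

Lemma smooth_sqrt f : smooth f U -> (forall s, U s -> 0 < f s) -> smooth (fun s => sqrt (f s)) U.
Proof. intros Hf Hn n. apply Ck_sqrt; auto. Qed.

Lemma smooth_pow f k : smooth f U -> smooth (fun s => f s ^ k) U.
Proof.
  intros Hf. induction k.
  - apply (smooth_ext (fun _ => 1)); auto. apply smooth_const.
  - apply (smooth_ext (fun s => f s * f s ^ k)); auto. apply smooth_mult; auto.
Qed.

End smooth_calculus.

Lemma smooth_of_ex_derive_n U g : (forall n s, U s -> ex_derive_n g n s) -> smooth g U.
Proof.
  intros H n. enough (forall m, Ck n (Derive_n g m) U) by apply (H0 O).
  induction n; intros m; simpl.
  - intros s Hs. exact (H (S m) s Hs).
  - split. intros s Hs. exact (H (S m) s Hs). exact (IHn (S m)).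
Qed.

Lemma smooth_subset U V f : smooth f U -> (forall s, V s -> U s) -> smooth f V.
Proof.
  intros H HVU n. specialize (H n). revert f H. induction n; intros f H; simpl in *.
  - intros s Hs; auto.
  - destruct H as [H1 H2]; split; auto.
Qed.

Ltac smooth_tac :=
  match goal with
  | |- smooth (fun _ => ?c) ?U => apply smooth_const; assumption
  | |- smooth (fun s => @?f s + @?g s) ?U =>
      refine (smooth_plus U _ f g _ _); [assumption|smooth_tac|smooth_tac]
  | |- smooth (fun s => @?f s - @?g s) ?U =>
      refine (smooth_minus U _ f g _ _); [assumption|smooth_tac|smooth_tac]
  | |- smooth (fun s => @?f s * @?g s) ?U =>
      refine (smooth_mult U _ f g _ _); [assumption|smooth_tac|smooth_tac]
  | |- smooth (fun s => @?f s / @?g s) ?U =>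
      refine (smooth_div U _ f g _ _ _); [assumption|smooth_tac|smooth_tac|]
  | |- smooth (fun s => - @?f s) ?U => refine (smooth_opp U _ f _); [assumption|smooth_tac]
  | |- smooth (fun s => / @?f s) ?U => refine (smooth_inv U _ f _ _); [assumption|smooth_tac|]
  | |- smooth (fun s => @?f s ^ ?k) ?U => refine (smooth_pow U _ f k _); [assumption|smooth_tac]
  | |- smooth (fun s => sqrt (@?f s)) ?U =>
      refine (smooth_sqrt U _ f _ _); [assumption|smooth_tac|]
  | |- smooth _ _ => assumption
  | |- _ => idtac
  end.

Lemma Derive_locally_const U f c : open U -> (forall s, U s -> f s = c) ->
  forall s, U s -> Derive f s = 0.
Proof.
  intros HU H s Hs. rewrite (Derive_ext_loc f (fun _ => c)); [apply Derive_const|].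
  eapply filter_imp; [|exact (HU s Hs)]. auto.
Qed.

Lemma inI_between lo hi x y z : inI lo hi x -> inI lo hi z -> x <= y <= z -> inI lo hi y.
Proof.
  intros [H1 H2] [H3 H4] [H5 H6]. split.
  - destruct lo as [l| |]; simpl in *; auto; lra.
  - destruct hi as [h| |]; simpl in *; auto; lra.
Qed.

Lemma inI_derive0_const lo hi g : (forall r, inI lo hi r -> is_derive g r 0) ->
  forall r1 r2, inI lo hi r1 -> inI lo hi r2 -> g r1 = g r2.
Proof.
  intros Hd r1 r2 H1 H2.
  assert (Hseg : forall x, Rmin r1 r2 <= x <= Rmax r1 r2 -> inI lo hi x).
  { intros x Hx. destruct (Rle_dec r1 r2).
    - rewrite Rmin_left, Rmax_right in Hx by lra. apply (inI_between lo hi r1 x r2); auto.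
    - rewrite Rmin_right, Rmax_left in Hx by lra. apply (inI_between lo hi r2 x r1); auto. }
  destruct (MVT_gen g r1 r2 (fun _ => 0)) as [c [Hc E]].
  - intros x Hx. apply Hd, Hseg. lra.
  - intros x Hx. apply continuity_pt_filterlim.
    apply (@ex_derive_continuous R_AbsRing R_NormedModule). exists 0. apply Hd, Hseg, Hx.
  - lra.
Qed.

Lemma is_derive_eq0_of_zero_on U g r l : open U -> (forall x, U x -> g x = 0) -> U r ->
  is_derive g r l -> l = 0.
Proof.
  intros HU Hz Hr Hd. rewrite <- (is_derive_unique _ _ _ Hd).
  exact (Derive_locally_const U g 0 HU Hz r Hr).
Qed.

Lemma open_nbhd_neq0 U f r l : open U -> U r -> is_derive f r l -> f r <> 0 ->
  exists V, open V /\ V r /\ forall x, V x -> U x /\ f x <> 0.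
Proof.
  intros HU Hr Hd Hn.
  assert (Hloc : locally r (fun x => U x /\ f x <> 0)).
  { apply filter_and; [apply HU; auto|]. apply locally_neq0; auto.
    apply (@ex_derive_continuous R_AbsRing R_NormedModule). exists l; exact Hd. }
  exists (fun x => locally x (fun y => U y /\ f y <> 0)). split; [|split].
  - intros x Hx. apply locally_locally. exact Hx.
  - exact Hloc.
  - intros x Hx. apply (locally_singleton _ _ Hx).
Qed.

Lemma comp_eq0_derive V (g dg P dP : R -> R) : open V ->
  (forall x, V x -> is_derive g x (dg x) /\ dg x <> 0) ->
  (forall y, is_derive P y (dP y)) ->
  (forall x, V x -> P (g x) = 0) -> forall x, V x -> dP (g x) = 0.
Proof.
  intros HV Hg HP Hz x Hx.
  destruct (Hg x Hx) as [Hd Hn].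
  assert (Hc : is_derive (fun y => P (g y)) x (dg x * dP (g x)))
    by (apply (is_derive_comp P g x (dP (g x)) (dg x)); auto).
  pose proof (is_derive_eq0_of_zero_on V (fun y => P (g y)) x _ HV Hz Hx Hc) as Z.
  apply Rmult_integral in Z. destruct Z; [contradiction|auto].
Qed.

(** * The Frenet apparatus in frame components *)

Definition Tfr (a b : R) (gam : R -> vec) (s : R) : vec := toframe a b (gam s) (vel gam s).

Fixpoint nabfr (a b : R) (gam : R -> vec) (n : nat) : R -> vec :=
  match n with
  | O => Tfr a b gam
  | S m => fun s => covfr a b (gam s) (Tfr a b gam s) (nabfr a b gam m s) (dvec (nabfr a b gam m) s)
  end.

Section Curve.
Variables (a b : R) (gam : R -> vec) (U : R -> Prop).
Hypothesis HU : open U.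
Hypothesis Hlam : forall s, U s -> lam a (gam s) <> 0.
Hypothesis Hgam : forall i, (i < 3)%nat -> smooth (fun s => gam s i) U.

Lemma Tfr_smooth i : (i < 3)%nat -> smooth (fun s => Tfr a b gam s i) U.
Proof.
  intros Hi.
  assert (G0 := Hgam 0 ltac:(lia)). assert (G1 := Hgam 1 ltac:(lia)). assert (G2 := Hgam 2 ltac:(lia)).
  assert (V0 := smooth_Derive _ _ G0). assert (V1 := smooth_Derive _ _ G1).
  assert (V2 := smooth_Derive _ _ G2).
  unfold Tfr, toframe, vel, lam.
  destruct i as [|[|[|i]]]; try lia; smooth_tac; intros s Hs; first [apply (Hlam s Hs) | lra].
Qed.

Lemma nabfr_smooth n i : (i < 3)%nat -> smooth (fun s => nabfr a b gam n s i) U.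
Proof.
  revert i. induction n; intros i Hi; [apply Tfr_smooth; auto|].
  assert (G0 := Hgam 0 ltac:(lia)). assert (G1 := Hgam 1 ltac:(lia)).
  assert (T0 := Tfr_smooth 0 ltac:(lia)). assert (T1 := Tfr_smooth 1 ltac:(lia)).
  assert (T2 := Tfr_smooth 2 ltac:(lia)).
  assert (W0 := IHn 0%nat ltac:(lia)). assert (W1 := IHn 1%nat ltac:(lia)).
  assert (W2 := IHn 2%nat ltac:(lia)).
  assert (D0 := smooth_Derive _ _ W0). assert (D1 := smooth_Derive _ _ W1).
  assert (D2 := smooth_Derive _ _ W2).
  simpl nabfr. unfold covfr, dvec, crs, rot, mk3.
  destruct i as [|[|[|i]]]; try lia; smooth_tac.
Qed.

Lemma nabT_fromframe n s : U s -> forall k, (k < 3)%nat ->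
  nabT a b gam n s k = fromframe a b (gam s) (nabfr a b gam n s) k.
Proof.
  revert s. induction n; intros s Hs k Hk.
  - simpl. unfold Tfr. rewrite fromframe_toframe; auto.
  - change (nabT a b gam (S n) s) with (cov a b gam (nabT a b gam n) s).
    rewrite <- (fromframe_toframe a b (gam s) (cov a b gam (nabT a b gam n) s) k) by auto.
    apply fromframe_ext. intros i Hi.
    rewrite (toframe_cov a b gam (nabT a b gam n) (nabfr a b gam n) s); auto.
    + intros j Hj. apply (smooth_ex_derive U); auto.
    + intros j Hj. apply (smooth_ex_derive U); auto. apply nabfr_smooth; auto.
    + eapply filter_imp; [|exact (HU s Hs)]. intros u Hu. apply IHn; auto.
Qed.

Lemma toframe_nabT n s : U s -> forall k, (k < 3)%nat ->
  toframe a b (gam s) (nabT a b gam n s) k = nabfr a b gam n s k.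
Proof.
  intros Hs k Hk.
  transitivity (toframe a b (gam s) (fromframe a b (gam s) (nabfr a b gam n s)) k).
  - destruct k as [|[|[|k]]]; try lia; unfold toframe; rewrite !(nabT_fromframe n s Hs) by lia;
    reflexivity.
  - apply toframe_fromframe; auto.
Qed.

End Curve.

(* Along a torsion-free Frenet curve, [nabla_T^n T = alpha_n T + beta_n N]
   for these polynomials in [f0 = kappa] and its derivatives [f1, f2, ...]. *)
Definition alpha2 (f0 : R -> R) r := - (f0 r ^ 2).
Definition beta2 (f1 : R -> R) r := f1 r.
Definition alpha3 (f0 f1 : R -> R) r := -3 * f0 r * f1 r.
Definition beta3 (f0 f2 : R -> R) r := f2 r - f0 r ^ 3.
Definition alpha4 (f0 f1 f2 : R -> R) r := -3 * f1 r ^ 2 - 4 * f0 r * f2 r + f0 r ^ 4.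
Definition beta4 (f0 f1 f3 : R -> R) r := f3 r - 6 * f0 r ^ 2 * f1 r.
Definition alpha5 (f0 f1 f2 f3 : R -> R) r :=
  -10 * f1 r * f2 r - 5 * f0 r * f3 r + 10 * f0 r ^ 3 * f1 r.
Definition beta5 (f0 f1 f2 f4 : R -> R) r :=
  f4 r - 15 * f0 r * f1 r ^ 2 - 10 * f0 r ^ 2 * f2 r + f0 r ^ 5.

Section alpha_beta_derivatives.
Variables (f0 f1 f2 f3 f4 : R -> R) (s : R).
Hypotheses (H0 : is_derive f0 s (f1 s)) (H1 : is_derive f1 s (f2 s))
  (H2 : is_derive f2 s (f3 s)) (H3 : is_derive f3 s (f4 s)).

Ltac derive_ab :=
  unfold alpha2, beta2, alpha3, beta3, alpha4, beta4; apply is_derive_unique; auto_derive;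
  [ repeat split; eexists; eassumption
  | eta_D; rewrite ?(is_derive_unique _ _ _ H0), ?(is_derive_unique _ _ _ H1),
      ?(is_derive_unique _ _ _ H2), ?(is_derive_unique _ _ _ H3); ring ].
Ltac ex_derive_ab :=
  unfold alpha3, beta3, alpha4, beta4; auto_derive; repeat split; eexists; eassumption.

Lemma Derive_alpha2 : Derive (alpha2 f0) s = -2 * f0 s * f1 s.
Proof. derive_ab. Qed.
Lemma Derive_alpha3 : Derive (alpha3 f0 f1) s = -3 * (f1 s * f1 s + f0 s * f2 s).
Proof. derive_ab. Qed.
Lemma Derive_beta3 : Derive (beta3 f0 f2) s = f3 s - 3 * f0 s ^ 2 * f1 s.
Proof. derive_ab. Qed.
Lemma Derive_alpha4 :
  Derive (alpha4 f0 f1 f2) s = -10 * f1 s * f2 s - 4 * f0 s * f3 s + 4 * f0 s ^ 3 * f1 s.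
Proof. derive_ab. Qed.
Lemma Derive_beta4 :
  Derive (beta4 f0 f1 f3) s = f4 s - 12 * f0 s * f1 s ^ 2 - 6 * f0 s ^ 2 * f2 s.
Proof. derive_ab. Qed.
Lemma ex_derive_alpha3 : ex_derive (alpha3 f0 f1) s. Proof. ex_derive_ab. Qed.
Lemma ex_derive_beta3 : ex_derive (beta3 f0 f2) s. Proof. ex_derive_ab. Qed.
Lemma ex_derive_alpha4 : ex_derive (alpha4 f0 f1 f2) s. Proof. ex_derive_ab. Qed.
Lemma ex_derive_beta4 : ex_derive (beta4 f0 f1 f3) s. Proof. ex_derive_ab. Qed.

End alpha_beta_derivatives.

Definition kapfr (a b : R) (gam : R -> vec) (s : R) : R :=
  sqrt (dot (nabfr a b gam 1 s) (nabfr a b gam 1 s)).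
Definition Nfr (a b : R) (gam : R -> vec) (s : R) : vec :=
  fun i => nabfr a b gam 1 s i / kapfr a b gam s.
Definition B3fr (a b : R) (gam : R -> vec) (s : R) : R := crs (Tfr a b gam s) (Nfr a b gam s) 2%nat.

Section Frenet.
Variables (a b : R) (gam : R -> vec) (U : R -> Prop).
Hypothesis HU : open U.
Hypothesis Hlam : forall s, U s -> lam a (gam s) <> 0.
Hypothesis Hgam : forall i, (i < 3)%nat -> smooth (fun s => gam s i) U.
Hypothesis Hunit : forall s, U s -> dot (Tfr a b gam s) (Tfr a b gam s) = 1.
Hypothesis HK : forall s, U s -> 0 < dot (nabfr a b gam 1 s) (nabfr a b gam 1 s).
Hypothesis Htor : forall s, U s ->
  dot (covfr a b (gam s) (Tfr a b gam s) (Nfr a b gam s) (dvec (Nfr a b gam) s))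
      (crs (Tfr a b gam s) (Nfr a b gam s)) = 0.

Notation tv := (Tfr a b gam).
Notation k := (kapfr a b gam).
Notation nv := (Nfr a b gam).
Notation rotT := (fun s => rot a b (gam s) (Tfr a b gam s)).

Lemma kapfr_smooth : smooth k U.
Proof.
  assert (W0 := nabfr_smooth a b gam U HU Hlam Hgam 1 0 ltac:(lia)).
  assert (W1 := nabfr_smooth a b gam U HU Hlam Hgam 1 1 ltac:(lia)).
  assert (W2 := nabfr_smooth a b gam U HU Hlam Hgam 1 2 ltac:(lia)).
  unfold kapfr, dot. smooth_tac. exact HK.
Qed.

Lemma kapfr_pos s : U s -> 0 < k s.
Proof. intros Hs. apply sqrt_lt_R0. auto. Qed.

Lemma Nfr_smooth i : (i < 3)%nat -> smooth (fun s => nv s i) U.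
Proof.
  intros Hi. assert (W := nabfr_smooth a b gam U HU Hlam Hgam 1 i Hi). assert (Kk := kapfr_smooth).
  unfold Nfr. smooth_tac. intros s Hs. pose proof (kapfr_pos s Hs). lra.
Qed.

Lemma ex_derive_Tfr s i : U s -> (i < 3)%nat -> ex_derive (fun r => tv r i) s.
Proof. intros Hs Hi. apply (smooth_ex_derive U); auto. apply Tfr_smooth; auto. Qed.

Lemma ex_derive_Nfr s i : U s -> (i < 3)%nat -> ex_derive (fun r => nv r i) s.
Proof. intros Hs Hi. apply (smooth_ex_derive U); auto. apply Nfr_smooth; auto. Qed.

Lemma nabfr1_kN s i : U s -> nabfr a b gam 1 s i = k s * nv s i.
Proof. intros Hs. unfold Nfr. pose proof (kapfr_pos s Hs). field. lra. Qed.

Lemma dot_Nfr s : U s -> dot (nv s) (nv s) = 1.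
Proof.
  intros Hs. pose proof (kapfr_pos s Hs) as Hp. pose proof (HK s Hs) as Hk.
  assert (E : k s * k s = dot (nabfr a b gam 1 s) (nabfr a b gam 1 s))
    by (unfold kapfr; rewrite sqrt_sqrt; lra).
  assert (E2 : dot (nv s) (nv s) = dot (nabfr a b gam 1 s) (nabfr a b gam 1 s) / (k s * k s))
    by (unfold dot, Nfr; field; lra).
  rewrite E2, <- E. field. lra.
Qed.

Lemma dvec_Tfr s i : U s -> dvec tv s i = k s * nv s i - crs (rotT s) (tv s) i.
Proof. intros Hs. rewrite <- nabfr1_kN by auto. simpl. unfold covfr. ring. Qed.

Lemma dot_Tfr_Nfr s : U s -> dot (tv s) (nv s) = 0.
Proof.
  intros Hs.
  assert (D0 := Derive_locally_const U (fun r => dot (tv r) (tv r)) 1 HU Hunit s Hs).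
  rewrite Derive_dot in D0 by (intros; apply ex_derive_Tfr; auto).
  assert (E : dot (dvec tv s) (tv s) = k s * dot (tv s) (nv s))
    by (unfold dot; rewrite !dvec_Tfr by auto; unfold crs, mk3; ring).
  assert (E' : dot (tv s) (dvec tv s) = dot (dvec tv s) (tv s)) by (unfold dot; ring).
  pose proof (kapfr_pos s Hs).
  assert (Z : k s * dot (tv s) (nv s) = 0) by lra.
  apply Rmult_integral in Z. destruct Z; lra.
Qed.

(* The Frenet equation [nabla_T N = - kappa T], using [tau = 0]. *)
Lemma dvec_Nfr s i : U s -> (i < 3)%nat -> dvec nv s i = - k s * tv s i - crs (rotT s) (nv s) i.
Proof.
  intros Hs Hi.
  set (Np := fun j => dvec nv s j + crs (rotT s) (nv s) j).
  enough (E : Np i = - k s * tv s i) by (unfold Np in E; lra).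
  assert (Ht := Hunit s Hs). assert (Hn := dot_Nfr s Hs). assert (Htn := dot_Tfr_Nfr s Hs).
  rewrite (decomp_orthonormal (tv s) (nv s) Ht Hn Htn Np i Hi).
  assert (E3 : dot Np (crs (tv s) (nv s)) = 0) by exact (Htor s Hs).
  assert (E2 : dot Np (nv s) = 0).
  { assert (D0 := Derive_locally_const U (fun r => dot (nv r) (nv r)) 1 HU dot_Nfr s Hs).
    rewrite Derive_dot in D0 by (intros; apply ex_derive_Nfr; auto).
    assert (X : dot Np (nv s) = (dot (dvec nv s) (nv s) + dot (nv s) (dvec nv s)) / 2)
      by (unfold Np, dot, crs, mk3; field).
    rewrite X, D0. field. }
  assert (E1 : dot Np (tv s) = - k s).
  { assert (D0 := Derive_locally_const U (fun r => dot (tv r) (nv r)) 0 HU dot_Tfr_Nfr s Hs).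
    rewrite Derive_dot in D0; [| intros; apply ex_derive_Tfr; auto | intros; apply ex_derive_Nfr; auto].
    assert (Y : dot (dvec tv s) (nv s) = k s * dot (nv s) (nv s) - dot (crs (rotT s) (tv s)) (nv s))
      by (unfold dot; rewrite !dvec_Tfr by auto; ring).
    assert (X : dot Np (tv s) + k s * dot (nv s) (nv s) =
                (k s * dot (nv s) (nv s) - dot (crs (rotT s) (tv s)) (nv s)) + dot (tv s) (dvec nv s))
      by (unfold Np, dot, crs, mk3; ring).
    rewrite Y in D0. rewrite Hn in X, D0. lra. }
  rewrite E1, E2, E3. ring.
Qed.

Lemma covfr_TN_comb (X : R -> vec) (al be : R -> R) s : U s ->
  (forall r, U r -> forall i, (i < 3)%nat -> X r i = al r * tv r i + be r * nv r i) ->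
  ex_derive al s -> ex_derive be s ->
  forall i, (i < 3)%nat -> dvec X s i + crs (rotT s) (X s) i =
    (Derive al s - k s * be s) * tv s i + (Derive be s + k s * al s) * nv s i.
Proof.
  intros Hs HX Ea Eb.
  assert (HD : forall i, (i < 3)%nat -> dvec X s i =
     Derive al s * tv s i + al s * dvec tv s i + (Derive be s * nv s i + be s * dvec nv s i)).
  { intros i Hi. unfold dvec at 1.
    rewrite (Derive_ext_loc (fun r => X r i) (fun r => al r * tv r i + be r * nv r i)).
    - assert (Et := ex_derive_Tfr s i Hs Hi). assert (En := ex_derive_Nfr s i Hs Hi).
      rewrite Derive_plus by (apply ex_derive_mult; assumption).
      rewrite !Derive_mult by assumption. reflexivity.
    - eapply filter_imp; [|exact (HU s Hs)]. intros r Hr. apply HX; auto. }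
  intros i Hi. rewrite HD, dvec_Tfr, dvec_Nfr by assumption.
  destruct i as [|[|[|i]]]; try lia; unfold crs, mk3; rewrite !(HX s Hs) by lia; ring.
Qed.

Lemma is_derive_kapfr j s : U s -> is_derive (Derive_n k j) s (Derive_n k (S j) s).
Proof.
  intros Hs. apply Derive_correct. apply (smooth_ex_derive U); auto.
  induction j; [exact kapfr_smooth | apply smooth_Derive; auto].
Qed.

Notation d1 := (Derive_n k 1).
Notation d2 := (Derive_n k 2).
Notation d3 := (Derive_n k 3).
Notation d4 := (Derive_n k 4).

Lemma nabfr2 s i : U s -> (i < 3)%nat -> nabfr a b gam 2 s i = alpha2 k s * tv s i + beta2 d1 s * nv s i.
Proof.
  intros Hs Hi.
  assert (HX : forall r, U r -> forall j, (j < 3)%nat ->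
                 nabfr a b gam 1 r j = (fun _ => 0) r * tv r j + k r * nv r j)
    by (intros r Hr j Hj; rewrite nabfr1_kN by assumption; ring).
  pose proof (covfr_TN_comb (nabfr a b gam 1) (fun _ => 0) k s Hs HX
    (@ex_derive_const R_AbsRing R_NormedModule 0 s) (ex_intro _ _ (is_derive_kapfr 0 s Hs)) i Hi) as St.
  change (nabfr a b gam 2 s i) with (covfr a b (gam s) (tv s) (nabfr a b gam 1 s) (dvec (nabfr a b gam 1) s) i).
  unfold covfr. rewrite St, Derive_const. unfold alpha2, beta2. simpl. eta_D. ring.
Qed.

Lemma nabfr3 s i : U s -> (i < 3)%nat ->
  nabfr a b gam 3 s i = alpha3 k d1 s * tv s i + beta3 k d2 s * nv s i.
Proof.
  intros Hs Hi.
  assert (E0 : ex_derive (alpha2 k) s)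
    by (unfold alpha2; auto_derive; exact (ex_intro _ _ (is_derive_kapfr 0 s Hs))).
  pose proof (covfr_TN_comb (nabfr a b gam 2) (alpha2 k) (beta2 d1) s Hs (fun r Hr j Hj => nabfr2 r j Hr Hj)
    E0 (ex_intro _ _ (is_derive_kapfr 1 s Hs)) i Hi) as St.
  change (nabfr a b gam 3 s i) with (covfr a b (gam s) (tv s) (nabfr a b gam 2 s) (dvec (nabfr a b gam 2) s) i).
  unfold covfr. rewrite St, (Derive_alpha2 k d1 s (is_derive_kapfr 0 s Hs)).
  change (Derive (beta2 d1) s) with (Derive d1 s).
  rewrite (is_derive_unique _ _ _ (is_derive_kapfr 1 s Hs)).
  unfold alpha2, beta2, alpha3, beta3. ring.
Qed.

Lemma nabfr4 s i : U s -> (i < 3)%nat ->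
  nabfr a b gam 4 s i = alpha4 k d1 d2 s * tv s i + beta4 k d1 d3 s * nv s i.
Proof.
  intros Hs Hi.
  assert (D0 := is_derive_kapfr 0 s Hs). assert (D1 := is_derive_kapfr 1 s Hs).
  assert (D2 := is_derive_kapfr 2 s Hs).
  pose proof (covfr_TN_comb (nabfr a b gam 3) (alpha3 k d1) (beta3 k d2) s Hs
    (fun r Hr j Hj => nabfr3 r j Hr Hj) (ex_derive_alpha3 k d1 d2 s D0 D1)
    (ex_derive_beta3 k d1 d2 d3 s D0 D2) i Hi) as St.
  change (nabfr a b gam 4 s i) with (covfr a b (gam s) (tv s) (nabfr a b gam 3 s) (dvec (nabfr a b gam 3) s) i).
  unfold covfr. rewrite St, (Derive_alpha3 k d1 d2 s D0 D1), (Derive_beta3 k d1 d2 d3 s D0 D2).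
  unfold alpha3, beta3, alpha4, beta4. ring.
Qed.

Lemma nabfr5 s i : U s -> (i < 3)%nat ->
  nabfr a b gam 5 s i = alpha5 k d1 d2 d3 s * tv s i + beta5 k d1 d2 d4 s * nv s i.
Proof.
  intros Hs Hi.
  assert (D0 := is_derive_kapfr 0 s Hs). assert (D1 := is_derive_kapfr 1 s Hs).
  assert (D2 := is_derive_kapfr 2 s Hs). assert (D3 := is_derive_kapfr 3 s Hs).
  pose proof (covfr_TN_comb (nabfr a b gam 4) (alpha4 k d1 d2) (beta4 k d1 d3) s Hs
    (fun r Hr j Hj => nabfr4 r j Hr Hj) (ex_derive_alpha4 k d1 d2 d3 s D0 D1 D2)
    (ex_derive_beta4 k d1 d2 d3 d4 s D0 D1 D3) i Hi) as St.
  change (nabfr a b gam 5 s i) with (covfr a b (gam s) (tv s) (nabfr a b gam 4 s) (dvec (nabfr a b gam 4) s) i).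
  unfold covfr.
  rewrite St, (Derive_alpha4 k d1 d2 d3 s D0 D1 D2), (Derive_beta4 k d1 d2 d3 d4 s D0 D1 D3).
  unfold alpha4, beta4, alpha5, beta5. ring.
Qed.

Lemma triharmonic_frame_TNB s : U s ->
  (forall i, (i < 3)%nat -> nabfr a b gam 5 s i + Rfr a b (nabfr a b gam 3 s) (tv s) (tv s) i
                          - Rfr a b (nabfr a b gam 2 s) (nabfr a b gam 1 s) (tv s) i = 0) ->
  alpha5 k d1 d2 d3 s = 0 /\
  beta5 k d1 d2 d4 s + (beta3 k d2 s - k s ^ 3) * (b^2/4 + (4*a - b^2) * B3fr a b gam s ^ 2) = 0 /\
  (beta3 k d2 s - k s ^ 3) * ((4*a - b^2) * nv s 2%nat * B3fr a b gam s) = 0.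
Proof.
  intros Hs HT.
  assert (Htt := Hunit s Hs). assert (Hnn := dot_Nfr s Hs). assert (Htn := dot_Tfr_Nfr s Hs).
  set (t := tv s) in *. set (m := nv s) in *.
  set (c := beta3 k d2 s - k s ^ 3).
  set (P := b^2/4 + (4*a - b^2) * B3fr a b gam s ^ 2).
  set (Q := - (4*a - b^2) * m 2%nat * B3fr a b gam s).
  enough (H : alpha5 k d1 d2 d3 s = 0 /\ beta5 k d1 d2 d4 s + c * P = 0 /\ c * Q = 0)
    by (unfold Q in H; destruct H as [? [? HQ]]; split; [|split]; auto; lra).
  apply (orthonormal_comb_eq0 t m Htt Hnn Htn).
  intros i Hi. rewrite <- (HT i Hi), (nabfr5 s i Hs Hi).
  rewrite (Rfr_ext a b (nabfr a b gam 3 s) t t (fun j => alpha3 k d1 s * t j + beta3 k d2 s * m j) t t i Hi)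
    by (intros j Hj; first [apply nabfr3; assumption | reflexivity]).
  rewrite (Rfr_ext a b (nabfr a b gam 2 s) (nabfr a b gam 1 s) t
             (fun j => alpha2 k s * t j + beta2 d1 s * m j) (fun j => k s * m j) t i Hi)
    by (intros j Hj; first [apply nabfr2; assumption | apply nabfr1_kN; assumption | reflexivity]).
  assert (L1 : Rfr a b (fun j => alpha3 k d1 s * t j + beta3 k d2 s * m j) t t i
               = beta3 k d2 s * Rfr a b m t t i)
    by (unfold Rfr, dot, hor, mk3; destruct i as [|[|[|i]]]; try lia; field).
  assert (L2 : Rfr a b (fun j => alpha2 k s * t j + beta2 d1 s * m j) (fun j => k s * m j) t i
               = - (alpha2 k s * k s) * Rfr a b m t t i)
    by (unfold Rfr, dot, hor, mk3; destruct i as [|[|[|i]]]; try lia; field).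
  rewrite L1, L2, (Rfr_NTT t m Htt Hnn Htn a b i Hi).
  unfold c, P, Q, B3fr, alpha2. fold t m. field.
Qed.

Lemma B3fr_smooth : smooth (B3fr a b gam) U.
Proof.
  assert (T0 := Tfr_smooth a b gam U HU Hlam Hgam 0 ltac:(lia)).
  assert (T1 := Tfr_smooth a b gam U HU Hlam Hgam 1 ltac:(lia)).
  assert (N0 := Nfr_smooth 0 ltac:(lia)). assert (N1 := Nfr_smooth 1 ltac:(lia)).
  apply (smooth_ext U HU (fun s => tv s 0%nat * nv s 1%nat - tv s 1%nat * nv s 0%nat)); [|reflexivity].
  smooth_tac.
Qed.

Lemma Derive_B3fr s : U s -> Derive (B3fr a b gam) s = b / 2 * nv s 2%nat.
Proof.
  intros Hs.
  assert (Htt := Hunit s Hs). assert (Htn := dot_Tfr_Nfr s Hs).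
  assert (D : Derive (B3fr a b gam) s
              = (dvec tv s 0%nat * nv s 1%nat + tv s 0%nat * dvec nv s 1%nat)
                - (dvec tv s 1%nat * nv s 0%nat + tv s 1%nat * dvec nv s 0%nat)).
  { apply is_derive_unique.
    exact (is_derive_det2 (fun r => tv r 0%nat) (fun r => tv r 1%nat) (fun r => nv r 0%nat)
      (fun r => nv r 1%nat) s (ex_derive_Tfr s 0 Hs ltac:(lia)) (ex_derive_Tfr s 1 Hs ltac:(lia))
      (ex_derive_Nfr s 0 Hs ltac:(lia)) (ex_derive_Nfr s 1 Hs ltac:(lia))). }
  rewrite D, !dvec_Tfr, !dvec_Nfr by (first [assumption | lia]).
  transitivity (b / 2 * (nv s 2%nat * dot (tv s) (tv s) - tv s 2%nat * dot (tv s) (nv s)));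
    [unfold crs, rot, dot, mk3; field | rewrite Htt, Htn; ring].
Qed.

Lemma Derive_Nfr3 s : U s ->
  Derive (fun r => nv r 2%nat) s = - k s * tv s 2%nat - b / 2 * B3fr a b gam s.
Proof.
  intros Hs. change (Derive (fun r => nv r 2%nat) s) with (dvec nv s 2%nat).
  rewrite dvec_Nfr by (first [assumption|lia]). unfold B3fr, crs, rot, mk3. field.
Qed.

Lemma third_components_sum_sq s : U s -> tv s 2%nat ^ 2 + nv s 2%nat ^ 2 + B3fr a b gam s ^ 2 = 1.
Proof.
  intros Hs. assert (Htt := Hunit s Hs). assert (Hnn := dot_Nfr s Hs). assert (Htn := dot_Tfr_Nfr s Hs).
  assert (E : forall t m : vec, t 2%nat ^ 2 + m 2%nat ^ 2 + crs t m 2%nat ^ 2 =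
     t 2%nat ^ 2 + m 2%nat ^ 2 + (dot t t - t 2%nat ^ 2) * (dot m m - m 2%nat ^ 2)
     - (dot t m - t 2%nat * m 2%nat) ^ 2)
    by (intros t m; unfold dot, crs, mk3; ring).
  unfold B3fr. rewrite E, Htt, Hnn, Htn. ring.
Qed.

End Frenet.

(** * The ODE system of a triharmonic torsion-free curve *)

(* Elimination of [kappa''], [kappa'''] and [kappa''''] between the T-equation
   [alpha5 = 0], its derivative, the N-equation and the first integral
   [C = kappa kappa'' + kappa'^2/2 - kappa^4/2] leaves a relation
   [relF A C kappa u = 0] with [u = kappa'^2]. *)
Definition relF (A C k u : R) : R :=
  -7 * u^2 + (16*C - 14*k^4 - A*k^2) * u - 7*k^8 - 3*A*k^6 - 20*C*k^4 + 2*A*C*k^2 - 4*C^2.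
Definition relF_dk (A C k u : R) : R :=
  (-56*k^3 - 2*A*k) * u - 56*k^7 - 18*A*k^5 - 80*C*k^3 + 4*A*C*k.
Definition relF_du (A C k u : R) : R := -14*u + 16*C - 14*k^4 - A*k^2.
Definition u_den (A C k : R) : R := 3 * (28*k^4 + A*k^2 + 4*C).
Definition u_num (A C k : R) : R := -84*k^8 - 25*A*k^6 - 132*C*k^4 + 6*A*C*k^2 + 24*C^2.

(* The resultant in [u] of [relF] and [u_den * u - u_num], as a polynomial in [K = k^2],
   and its successive derivatives in [K]. *)
Definition resQ (A C K : R) : R :=
  36288*C^3 + 14112*A*C^2*K + (-362880*C^2 + 1452*A^2*C)*K^2 + (-64512*A*C + 48*A^3)*K^3
  + (-254016*C - 2548*A^2)*K^4 - 14112*A*K^5.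
Definition resQ_d1 (A C K : R) : R :=
  14112*A*C^2 + 2*(-362880*C^2 + 1452*A^2*C)*K + 3*(-64512*A*C + 48*A^3)*K^2
  + 4*(-254016*C - 2548*A^2)*K^3 - 5*14112*A*K^4.
Definition resQ_d2 (A C K : R) : R :=
  2*(-362880*C^2 + 1452*A^2*C) + 6*(-64512*A*C + 48*A^3)*K
  + 12*(-254016*C - 2548*A^2)*K^2 - 20*14112*A*K^3.
Definition resQ_d3 (A C K : R) : R :=
  6*(-64512*A*C + 48*A^3) + 24*(-254016*C - 2548*A^2)*K - 60*14112*A*K^2.
Definition resQ_d4 (A C K : R) : R := 24*(-254016*C - 2548*A^2) - 120*14112*A*K.
Definition resQ_d5 (A C K : R) : R := - 120*14112*A.

Lemma is_derive_resQ A C y : is_derive (resQ A C) y (resQ_d1 A C y).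
Proof. unfold resQ, resQ_d1. auto_derive; auto. ring. Qed.
Lemma is_derive_resQ_d1 A C y : is_derive (resQ_d1 A C) y (resQ_d2 A C y).
Proof. unfold resQ_d1, resQ_d2. auto_derive; auto. ring. Qed.
Lemma is_derive_resQ_d2 A C y : is_derive (resQ_d2 A C) y (resQ_d3 A C y).
Proof. unfold resQ_d2, resQ_d3. auto_derive; auto. ring. Qed.
Lemma is_derive_resQ_d3 A C y : is_derive (resQ_d3 A C) y (resQ_d4 A C y).
Proof. unfold resQ_d3, resQ_d4. auto_derive; auto. ring. Qed.
Lemma is_derive_resQ_d4 A C y : is_derive (resQ_d4 A C) y (resQ_d5 A C y).
Proof. unfold resQ_d4, resQ_d5. auto_derive; auto. ring. Qed.

Lemma relF_eq0 k p q r3 r4 A C : k <> 0 ->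
  -10*p*q - 5*k*r3 + 10*k^3*p = 0 ->
  -10*(q^2 + p*r3) - 5*(p*r3 + k*r4) + 30*k^2*p^2 + 10*k^3*q = 0 ->
  r4 - 15*k*p^2 - 10*k^2*q + k^5 + (q - 2*k^3)*A = 0 ->
  k*q + p^2/2 - k^4/2 = C ->
  relF A C k (p^2) = 0.
Proof.
  intros Hk T T' N Ce.
  assert (Hr3 : r3 = (10*k^3*p - 10*p*q)/(5*k)) by (field_simplify_eq; auto; lra).
  assert (Hr4 : r4 = (-10*(q^2 + p*r3) - 5*p*r3 + 30*k^2*p^2 + 10*k^3*q)/(5*k))
    by (field_simplify_eq; auto; lra).
  assert (Hq : q = (C - p^2/2 + k^4/2)/k) by (field_simplify_eq; auto; lra).
  rewrite Hr4, Hr3, Hq in N.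
  match type of N with ?L = 0 =>
    transitivity (2*k^3*L); [unfold relF; field; auto | rewrite N; ring] end.
Qed.

Lemma u_den_eq A C k u : k <> 0 -> relF A C k u = 0 ->
  k * relF_dk A C k u + relF_du A C k u * (2*C + k^4 - u) = 0 -> u_den A C k * u = u_num A C k.
Proof.
  intros Hk HF HH.
  assert (E : k * relF_dk A C k u + relF_du A C k u * (2*C + k^4 - u) + 2 * relF A C k u
              = - u_den A C k * u + u_num A C k)
    by (unfold relF_dk, relF_du, relF, u_den, u_num; ring).
  rewrite HF, HH in E. lra.
Qed.

Lemma resQ_eq0 A C k u : k <> 0 -> relF A C k u = 0 -> u_den A C k * u = u_num A C k ->
  resQ A C (k^2) = 0.
Proof.
  intros Hk HF HG.
  assert (E : k^4 * resQ A C (k^2) = u_den A C k ^ 2 * relF A C k u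
     + (u_num A C k - u_den A C k * u) *
       (-7 * (u_num A C k + u_den A C k * u) + (16*C - 14*k^4 - A*k^2) * u_den A C k))
    by (unfold resQ, u_den, u_num, relF; ring).
  rewrite HF, HG, Rminus_diag in E.
  apply (Rmult_eq_reg_l (k^4)); [|apply pow_nonzero; auto]. rewrite E. ring.
Qed.

Section Frenet_ODE.
Variables (a b : R) (lo hi : Rbar) (f0 f1 f2 f3 f4 B3f N3f T3f : R -> R) (s0 : R).
Notation U := (inI lo hi).
Hypothesis Hs0 : U s0.
Hypothesis Hd0 : forall r, U r -> is_derive f0 r (f1 r).
Hypothesis Hd1 : forall r, U r -> is_derive f1 r (f2 r).
Hypothesis Hd2 : forall r, U r -> is_derive f2 r (f3 r).
Hypothesis Hd3 : forall r, U r -> is_derive f3 r (f4 r).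
Hypothesis HBd : forall r, U r -> is_derive B3f r (b / 2 * N3f r).
Hypothesis HNd : forall r, U r -> is_derive N3f r (- f0 r * T3f r - b / 2 * B3f r).
Hypothesis Hpos : forall r, U r -> 0 < f0 r.
Hypothesis HT : forall r, U r -> alpha5 f0 f1 f2 f3 r = 0.
Hypothesis HN : forall r, U r ->
  beta5 f0 f1 f2 f4 r + (beta3 f0 f2 r - f0 r ^ 3) * (b^2/4 + (4*a - b^2) * B3f r ^ 2) = 0.
Hypothesis HB : forall r, U r -> (beta3 f0 f2 r - f0 r ^ 3) * ((4*a - b^2) * N3f r * B3f r) = 0.
Hypothesis Hunit3 : forall r, U r -> T3f r ^ 2 + N3f r ^ 2 + B3f r ^ 2 = 1.
Hypothesis HD : 4 * a <> b ^ 2.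

Let HU : open U := open_inI lo hi.

Lemma not_open_f2_cubic V x : open V -> V x -> (forall y, V y -> U y) ->
  ~ (forall y, V y -> f2 y = 2 * f0 y ^ 3).
Proof.
  intros HV Vx HVU H2.
  assert (H3 : forall y, V y -> f3 y = 6 * f0 y ^ 2 * f1 y).
  { intros y Vy. rewrite <- (is_derive_unique _ _ _ (Hd2 y (HVU y Vy))).
    rewrite (Derive_ext_loc f2 (fun z => 2 * f0 z ^ 3)).
    - apply is_derive_unique. pose proof (Hd0 y (HVU y Vy)) as D. auto_derive.
      + exists (f1 y); auto.
      + eta_D. rewrite (is_derive_unique _ _ _ D). ring.
    - eapply filter_imp; [|exact (HV y Vy)]. apply H2. }
  assert (H1 : forall y, V y -> f1 y = 0).
  { intros y Vy. pose proof (HT y (HVU y Vy)) as T. unfold alpha5 in T.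
    rewrite H2, H3 in T by auto. pose proof (Hpos y (HVU y Vy)) as Py.
    assert (W3 : 0 < f0 y ^ 3) by (apply pow_lt; lra). nra. }
  pose proof (is_derive_eq0_of_zero_on V f1 x (f2 x) HV H1 Vx (Hd1 x (HVU x Vx))) as Z.
  rewrite H2 in Z by auto. pose proof (Hpos x (HVU x Vx)) as Px.
  assert (0 < f0 x ^ 3) by (apply pow_lt; lra). lra.
Qed.

Lemma N3_B3_eq0 r : U r -> N3f r * B3f r = 0.
Proof.
  intros Hr. apply NNPP. intro Hne.
  assert (Hder : is_derive (fun x => N3f x * B3f x) r
                   ((- f0 r * T3f r - b / 2 * B3f r) * B3f r + N3f r * (b / 2 * N3f r)))
    by (apply (is_derive_mult N3f B3f); auto; intros; apply Rmult_comm).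
  destruct (open_nbhd_neq0 U _ r _ HU Hr Hder Hne) as [V [HV [Vr HVP]]].
  apply (not_open_f2_cubic V r HV Vr (fun y Vy => proj1 (HVP y Vy))).
  intros y Vy. destruct (HVP y Vy) as [Uy Ny]. pose proof (HB y Uy) as Q.
  assert (4*a - b^2 <> 0) by lra.
  assert (Hnz : (4*a - b^2) * N3f y * B3f y <> 0).
  { rewrite Rmult_assoc. apply Rmult_integral_contrapositive_currified; auto. }
  apply Rmult_integral in Q. destruct Q as [Q|Q]; [unfold beta3 in Q; lra | contradiction].
Qed.

Lemma B3_const r : U r -> B3f r = B3f s0.
Proof.
  intros Hr.
  assert (Hsq : forall x, U x -> is_derive (fun y => B3f y ^ 2) x 0).
  { intros x Ux. pose proof (HBd x Ux) as Hb. pose proof (N3_B3_eq0 x Ux) as Z.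
    auto_derive; [exists (b / 2 * N3f x); auto|]. eta_D. rewrite (is_derive_unique _ _ _ Hb).
    transitivity (b * (N3f x * B3f x)); [field | rewrite Z; field]. }
  assert (Esq : forall x, U x -> B3f x ^ 2 = B3f s0 ^ 2)
    by (intros x Ux; exact (inI_derive0_const lo hi _ Hsq x s0 Ux Hs0)).
  destruct (Req_dec (B3f s0) 0) as [Z|Z].
  - pose proof (Esq r Hr) as E. rewrite Z in E |- *. nra.
  - apply (inI_derive0_const lo hi B3f); auto. intros x Ux.
    assert (Bx : B3f x <> 0) by (intro Hx; pose proof (Esq x Ux) as E; rewrite Hx in E; nra).
    pose proof (N3_B3_eq0 x Ux) as N0. apply Rmult_integral in N0.
    destruct N0 as [N0|N0]; [|contradiction].
    replace 0 with (b / 2 * N3f x) by (rewrite N0; ring). auto.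
Qed.

Let c := B3f s0.
Let A := b^2/4 + (4*a - b^2) * c^2.
Let first_integral := fun x => f0 x * f2 x + f1 x ^ 2 / 2 - f0 x ^ 4 / 2.
Let C := first_integral s0.

Lemma first_integral_const x : U x -> first_integral x = C.
Proof.
  intros Ux. apply (inI_derive0_const lo hi first_integral); auto.
  intros y Uy. pose proof (Hd0 y Uy) as D0. pose proof (Hd1 y Uy) as D1. pose proof (Hd2 y Uy) as D2.
  pose proof (HT y Uy) as T. unfold alpha5 in T.
  unfold first_integral. auto_derive; [repeat split; eexists; eassumption|].
  eta_D. rewrite (is_derive_unique _ _ _ D0), (is_derive_unique _ _ _ D1), (is_derive_unique _ _ _ D2).
  lra.
Qed.

Lemma Derive_alpha5_eq0 x : U x ->
  -10*(f2 x^2 + f1 x*f3 x) - 5*(f1 x*f3 x + f0 x*f4 x) + 30*f0 x^2*f1 x^2 + 10*f0 x^3*f2 x = 0.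
Proof.
  intros Ux. apply (is_derive_eq0_of_zero_on U (alpha5 f0 f1 f2 f3) x); auto.
  pose proof (Hd0 x Ux) as D0. pose proof (Hd1 x Ux) as D1. pose proof (Hd2 x Ux) as D2.
  pose proof (Hd3 x Ux) as D3.
  unfold alpha5. auto_derive; [repeat split; eexists; eassumption|].
  eta_D. rewrite (is_derive_unique _ _ _ D0), (is_derive_unique _ _ _ D1),
    (is_derive_unique _ _ _ D2), (is_derive_unique _ _ _ D3).
  ring.
Qed.

Lemma relF_along x : U x -> relF A C (f0 x) (f1 x ^ 2) = 0.
Proof.
  intros Ux. pose proof (Hpos x Ux).
  apply (relF_eq0 (f0 x) (f1 x) (f2 x) (f3 x) (f4 x)); [lra | | apply Derive_alpha5_eq0; auto | |].
  - pose proof (HT x Ux) as T. unfold alpha5 in T. lra.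
  - pose proof (HN x Ux) as N. rewrite (B3_const x Ux) in N. fold c in N.
    unfold beta5, beta3 in N. unfold A. rewrite <- N. ring.
  - pose proof (first_integral_const x Ux) as E. unfold first_integral in E. lra.
Qed.

Lemma u_den_relation V : open V -> (forall y, V y -> U y /\ f1 y <> 0) ->
  forall y, V y -> u_den A C (f0 y) * f1 y ^ 2 = u_num A C (f0 y).
Proof.
  intros HV HVP y Vy. destruct (HVP y Vy) as [Uy Ny]. pose proof (Hpos y Uy) as Py.
  pose proof (Hd0 y Uy) as D0. pose proof (Hd1 y Uy) as D1.
  assert (Hder : is_derive (fun z => relF A C (f0 z) (f1 z ^ 2)) y
     (relF_dk A C (f0 y) (f1 y ^ 2) * f1 y + relF_du A C (f0 y) (f1 y ^ 2) * (2 * f1 y * f2 y))).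
  { unfold relF. auto_derive; [repeat split; eexists; eassumption|].
    eta_D. rewrite (is_derive_unique _ _ _ D0), (is_derive_unique _ _ _ D1).
    unfold relF_dk, relF_du. ring. }
  pose proof (is_derive_eq0_of_zero_on U _ y _ HU relF_along Uy Hder) as Z.
  assert (Z2 : f1 y * (relF_dk A C (f0 y) (f1 y ^ 2) + 2 * f2 y * relF_du A C (f0 y) (f1 y ^ 2)) = 0)
    by (rewrite <- Z; ring).
  apply Rmult_integral in Z2. destruct Z2 as [Z2|Z2]; [contradiction|].
  apply u_den_eq; [lra | apply relF_along; auto |].
  pose proof (first_integral_const y Uy) as E. unfold first_integral in E.
  replace (2 * C + f0 y ^ 4 - f1 y ^ 2) with (2 * f0 y * f2 y) by (rewrite <- E; field).
  transitivity (f0 y * (relF_dk A C (f0 y) (f1 y ^ 2) + 2 * f2 y * relF_du A C (f0 y) (f1 y ^ 2)));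
    [ring | rewrite Z2; ring].
Qed.

(* On an open set where [kappa' <> 0], [kappa^2] takes a continuum of values,
   all roots of [resQ A C]; hence [A = C = 0], which contradicts [u_den_relation]. *)
Lemma f1_eq0 x : U x -> f1 x = 0.
Proof.
  intros Ux. apply NNPP. intro Hne.
  destruct (open_nbhd_neq0 U f1 x (f2 x) HU Ux (Hd1 x Ux) Hne) as [V [HV [Vx HVP]]].
  assert (HG := u_den_relation V HV HVP).
  assert (Hq : forall y, V y -> resQ A C (f0 y ^ 2) = 0).
  { intros y Vy. destruct (HVP y Vy) as [Uy Ny]. pose proof (Hpos y Uy).
    apply (resQ_eq0 A C (f0 y) (f1 y ^ 2)); [lra | apply relF_along; auto | apply HG; auto]. }
  assert (Hg : forall y, V y ->
            is_derive (fun z => f0 z ^ 2) y (2 * f0 y * f1 y) /\ 2 * f0 y * f1 y <> 0).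
  { intros y Vy. destruct (HVP y Vy) as [Uy Ny]. pose proof (Hpos y Uy). split.
    - pose proof (Hd0 y Uy) as D0. auto_derive; [exists (f1 y); auto|].
      eta_D. rewrite (is_derive_unique _ _ _ D0). ring.
    - apply Rmult_integral_contrapositive_currified; auto. lra. }
  pose proof (comp_eq0_derive V _ _ _ _ HV Hg (is_derive_resQ A C) Hq) as S1.
  pose proof (comp_eq0_derive V _ _ _ _ HV Hg (is_derive_resQ_d1 A C) S1) as S2.
  pose proof (comp_eq0_derive V _ _ _ _ HV Hg (is_derive_resQ_d2 A C) S2) as S3.
  pose proof (comp_eq0_derive V _ _ _ _ HV Hg (is_derive_resQ_d3 A C) S3) as S4.
  pose proof (comp_eq0_derive V _ _ _ _ HV Hg (is_derive_resQ_d4 A C) S4) as S5.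
  assert (HA : A = 0) by (pose proof (S5 x Vx) as W; unfold resQ_d5 in W; lra).
  assert (HC : C = 0) by (pose proof (S4 x Vx) as W; unfold resQ_d4 in W; rewrite HA in W; lra).
  pose proof (HG x Vx) as W. rewrite HA, HC in W. unfold u_den, u_num in W.
  pose proof (Hpos x Ux) as P. assert (0 < f0 x ^ 4) by (apply pow_lt; lra).
  assert (0 < f1 x ^ 2) by (apply pow2_gt_0; auto).
  nra.
Qed.

Lemma f0_const r : U r -> f0 r = f0 s0.
Proof.
  intros Ur. apply (inI_derive0_const lo hi f0); auto.
  intros y Uy. rewrite <- (f1_eq0 y Uy). auto.
Qed.

Lemma f0_sq : f0 s0 ^ 2 = 2 * A.
Proof.
  assert (Z2 : f2 s0 = 0)
    by exact (is_derive_eq0_of_zero_on U f1 s0 _ HU f1_eq0 Hs0 (Hd1 s0 Hs0)).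
  assert (Z3 : forall r, U r -> f3 r = 0).
  { intros r Ur. apply (is_derive_eq0_of_zero_on U f2 r); auto.
    intros y Uy. exact (is_derive_eq0_of_zero_on U f1 y _ HU f1_eq0 Uy (Hd1 y Uy)). }
  assert (Z4 : f4 s0 = 0) by exact (is_derive_eq0_of_zero_on U f3 s0 _ HU Z3 Hs0 (Hd3 s0 Hs0)).
  pose proof (HN s0 Hs0) as N. unfold beta5, beta3 in N.
  rewrite (f1_eq0 s0 Hs0), Z2, Z4 in N. fold c A in N.
  pose proof (Hpos s0 Hs0) as P. assert (0 < f0 s0 ^ 3) by (apply pow_lt; lra).
  assert (E : f0 s0 ^ 3 * (f0 s0 ^ 2 - 2 * A) = 0) by (rewrite <- N; ring).
  apply Rmult_integral in E. destruct E; lra.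
Qed.

(* [B3 = 0] would force [N3 = 0] (or [b = 0]), then [T3 = 0]: impossible for a unit vector. *)
Lemma B3_neq0 : c <> 0.
Proof.
  intros Hc. pose proof (Hpos s0 Hs0) as P.
  assert (B0 : forall r, U r -> B3f r = 0) by (intros r Ur; rewrite B3_const by auto; exact Hc).
  destruct (Req_dec b 0) as [Hb|Hb].
  - pose proof f0_sq as E. unfold A in E. rewrite Hc, Hb in E.
    assert (0 < f0 s0 ^ 2) by (apply pow_lt; lra). lra.
  - assert (N0 : forall r, U r -> N3f r = 0).
    { intros r Ur. pose proof (is_derive_eq0_of_zero_on U B3f r _ HU B0 Ur (HBd r Ur)) as W.
      apply Rmult_integral in W. destruct W as [W|W]; auto. lra. }
    pose proof (is_derive_eq0_of_zero_on U N3f s0 _ HU N0 Hs0 (HNd s0 Hs0)) as T0.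
    rewrite B0 in T0 by auto.
    assert (T3f s0 = 0) by nra.
    pose proof (Hunit3 s0 Hs0) as W. rewrite H, N0, B0 in W by auto. lra.
Qed.

Lemma frenet_ode_solution : exists k0 c0, 0 < k0 /\ (forall r, U r -> f0 r = k0 /\ B3f r = c0) /\
  k0 ^ 2 = 2 * (b ^ 2 / 4 + (4 * a - b ^ 2) * c0 ^ 2) /\ c0 <> 0.
Proof.
  exists (f0 s0), c. split; [|split; [|split]].
  - apply Hpos, Hs0.
  - intros r Ur. split; [apply f0_const | apply B3_const]; auto.
  - exact f0_sq.
  - exact B3_neq0.
Qed.

End Frenet_ODE.

Section Curve_in_BCV.
Variables (a b : R) (lo hi : Rbar) (gam : R -> vec).
Hypothesis Harc : arclength_curve a b lo hi gam.
Hypothesis Htri : triharmonic a b lo hi gam.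
Hypothesis Hzt : zero_torsion a b lo hi gam.
Notation I := (inI lo hi).

Lemma lam_neq0 s : I s -> lam a (gam s) <> 0.
Proof. intros Hs. destruct Harc as [_ [Hd _]]. pose proof (Hd s Hs). unfold inBCV in H. lra. Qed.

Lemma gam_smooth i : (i < 3)%nat -> smooth (fun s => gam s i) I.
Proof. intros Hi. destruct Harc as [_ [_ [Hs _]]]. apply smooth_of_ex_derive_n. intros; apply Hs; auto. Qed.

Lemma dot_Tfr s : I s -> dot (Tfr a b gam s) (Tfr a b gam s) = 1.
Proof.
  intros Hs. destruct Harc as [_ [_ [_ Hu]]]. unfold Tfr.
  rewrite <- inner_toframe by (apply lam_neq0; auto). apply Hu; auto.
Qed.

Lemma curv_kapfr s : I s -> curv a b gam s = kapfr a b gam s.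
Proof.
  intros Hs. unfold curv, kapfr. f_equal. rewrite inner_toframe by (apply lam_neq0; auto).
  apply dot_ext; intros i Hi; apply (toframe_nabT a b gam I (open_inI lo hi) lam_neq0 gam_smooth); auto.
Qed.

Section Nonvanishing_curvature.
Variables (lo' hi' : Rbar).
Notation J := (inI lo' hi').
Hypothesis HJI : forall s, J s -> I s.
Hypothesis Hnz : forall s, J s -> curv a b gam s <> 0.
Let HJ : open J := open_inI lo' hi'.

Let lam_neq0_J s : J s -> lam a (gam s) <> 0 := fun Hs => lam_neq0 s (HJI s Hs).
Let gam_smooth_J i (Hi : (i < 3)%nat) : smooth (fun s => gam s i) J :=
  smooth_subset I J _ (gam_smooth i Hi) HJI.
Let dot_Tfr_J s : J s -> dot (Tfr a b gam s) (Tfr a b gam s) = 1 := fun Hs => dot_Tfr s (HJI s Hs).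

Lemma dot_nabfr1_pos s : J s -> 0 < dot (nabfr a b gam 1 s) (nabfr a b gam 1 s).
Proof.
  intros Hs. pose proof (Hnz s Hs) as N. rewrite curv_kapfr in N by auto. unfold kapfr in N.
  destruct (Rle_lt_or_eq_dec _ _ (dot_self_ge0 (nabfr a b gam 1 s))) as [|E]; auto.
  rewrite <- E, sqrt_0 in N. lra.
Qed.

Lemma toframe_frN s i : J s -> (i < 3)%nat -> toframe a b (gam s) (frN a b gam s) i = Nfr a b gam s i.
Proof.
  intros Hs Hi. unfold frN, Nfr. rewrite toframe_div; auto.
  rewrite (toframe_nabT a b gam J HJ lam_neq0_J gam_smooth_J) by auto. rewrite curv_kapfr by auto.
  reflexivity.
Qed.

Lemma torsion_frame_eq0 s : J s ->
  dot (covfr a b (gam s) (Tfr a b gam s) (Nfr a b gam s) (dvec (Nfr a b gam) s))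
      (crs (Tfr a b gam s) (Nfr a b gam s)) = 0.
Proof.
  intros Hs. rewrite <- (Hzt s (HJI s Hs) (Hnz s Hs)). unfold tors.
  rewrite inner_toframe by auto.
  apply dot_ext; intros i Hi.
  - rewrite (toframe_cov a b gam (frN a b gam) (Nfr a b gam) s); auto.
    + intros j Hj. apply (smooth_ex_derive J); auto.
    + intros j Hj. apply (ex_derive_Nfr a b gam J HJ lam_neq0_J gam_smooth_J dot_nabfr1_pos); auto.
    + eapply filter_imp; [|exact (HJ s Hs)]. intros u Hu k Hk.
      unfold frN, Nfr. rewrite fromframe_div; auto.
      * rewrite (nabT_fromframe a b gam J HJ lam_neq0_J gam_smooth_J) by auto.
        rewrite curv_kapfr by auto. reflexivity.
      * pose proof (kapfr_pos a b gam J dot_nabfr1_pos u Hu). lra.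
  - unfold frB. rewrite toframe_cross by auto.
    apply crs_ext; intros j Hj; [reflexivity|]. symmetry; apply toframe_frN; auto.
Qed.

Lemma B3_B3fr s : J s -> B3 a b gam s = B3fr a b gam s.
Proof.
  intros Hs. unfold B3. rewrite inner_toframe by auto.
  assert (E : dot (toframe a b (gam s) (frB a b gam s)) (toframe a b (gam s) E3) =
              toframe a b (gam s) (frB a b gam s) 2%nat).
  { unfold dot. unfold toframe at 2 4 6. unfold E3. simpl. field. auto. }
  rewrite E. unfold frB. rewrite toframe_cross by auto.
  unfold B3fr. apply crs_ext; intros j Hj; [reflexivity|]. apply toframe_frN; auto.
Qed.

Lemma triharmonic_frame s : J s -> forall i, (i < 3)%nat ->
  nabfr a b gam 5 s i + Rfr a b (nabfr a b gam 3 s) (Tfr a b gam s) (Tfr a b gam s) i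
  - Rfr a b (nabfr a b gam 2 s) (nabfr a b gam 1 s) (Tfr a b gam s) i = 0.
Proof.
  intros Hs i Hi.
  pose proof (lam_neq0_J s Hs) as Hl.
  assert (Z := toframe_eq0 a b (gam s) (fun l => nabT a b gam 5 s l
    + Rm a b (gam s) (nabT a b gam 3 s) (vel gam s) (vel gam s) l
    - Rm a b (gam s) (nabT a b gam 2 s) (nabT a b gam 1 s) (vel gam s) l) i (Htri s (HJI s Hs)) Hi).
  rewrite toframe_add_sub, !toframe_Rm in Z by auto.
  rewrite (toframe_nabT a b gam J HJ lam_neq0_J gam_smooth_J 5 s Hs i Hi) in Z.
  rewrite <- Z. f_equal; [f_equal|]; apply Rfr_ext; auto; intros j Hj;
  first [ symmetry; apply (toframe_nabT a b gam J HJ lam_neq0_J gam_smooth_J); auto | reflexivity ].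
Qed.

Lemma helix_on_interval (HD : 4 * a <> b ^ 2) s0 (Hs0 : J s0) : exists k0 c, 0 < k0 /\
  (forall s, J s -> curv a b gam s = k0 /\ B3 a b gam s = c) /\
  k0 ^ 2 = 2 * (b ^ 2 / 4 + (4 * a - b ^ 2) * c ^ 2) /\ c <> 0.
Proof.
  pose proof (fun j r Hr => is_derive_kapfr a b gam J HJ lam_neq0_J gam_smooth_J dot_nabfr1_pos j r Hr)
    as Hd.
  assert (HBd : forall r, J r -> is_derive (B3fr a b gam) r (b / 2 * Nfr a b gam r 2%nat)).
  { intros r Hr. rewrite <- (Derive_B3fr a b gam J HJ lam_neq0_J gam_smooth_J dot_Tfr_J
      dot_nabfr1_pos torsion_frame_eq0 r Hr).
    apply Derive_correct, (smooth_ex_derive J); auto.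
    exact (B3fr_smooth a b gam J HJ lam_neq0_J gam_smooth_J dot_nabfr1_pos). }
  assert (HNd : forall r, J r -> is_derive (fun r => Nfr a b gam r 2%nat) r
                  (- kapfr a b gam r * Tfr a b gam r 2%nat - b / 2 * B3fr a b gam r)).
  { intros r Hr. rewrite <- (Derive_Nfr3 a b gam J HJ lam_neq0_J gam_smooth_J dot_Tfr_J
      dot_nabfr1_pos torsion_frame_eq0 r Hr).
    apply Derive_correct, (smooth_ex_derive J); auto.
    exact (Nfr_smooth a b gam J HJ lam_neq0_J gam_smooth_J dot_nabfr1_pos 2 ltac:(lia)). }
  pose proof (fun r Hr => triharmonic_frame_TNB a b gam J HJ lam_neq0_J gam_smooth_J dot_Tfr_J
    dot_nabfr1_pos torsion_frame_eq0 r Hr (triharmonic_frame r Hr)) as HS.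
  destruct (frenet_ode_solution a b lo' hi' (kapfr a b gam) (Derive_n (kapfr a b gam) 1)
     (Derive_n (kapfr a b gam) 2) (Derive_n (kapfr a b gam) 3) (Derive_n (kapfr a b gam) 4) (B3fr a b gam) (fun r => Nfr a b gam r 2%nat) (fun r => Tfr a b gam r 2%nat) s0 Hs0
     (Hd 0%nat) (Hd 1%nat) (Hd 2%nat) (Hd 3%nat) HBd HNd (kapfr_pos a b gam J dot_nabfr1_pos)
     (fun r Hr => proj1 (HS r Hr)) (fun r Hr => proj1 (proj2 (HS r Hr)))
     (fun r Hr => proj2 (proj2 (HS r Hr)))
     (third_components_sum_sq a b gam J HJ lam_neq0_J gam_smooth_J dot_Tfr_J dot_nabfr1_pos) HD)
    as [k0 [c [Hk0 [Hall [Hrel Hc]]]]].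
  exists k0, c. split; [auto|split; [|split; auto]].
  intros s Hs. destruct (Hall s Hs) as [E1 E2].
  rewrite curv_kapfr, B3_B3fr by auto. auto.
Qed.

End Nonvanishing_curvature.

Notation ksq := (fun s => dot (nabfr a b gam 1 s) (nabfr a b gam 1 s)).

Lemma curv_sqrt_ksq s : I s -> curv a b gam s = sqrt (ksq s).
Proof. exact (curv_kapfr s). Qed.

Lemma curv_neq0_ksq s : I s -> curv a b gam s <> 0 <-> ksq s <> 0.
Proof.
  intros Hs. rewrite curv_sqrt_ksq by auto. pose proof (dot_self_ge0 (nabfr a b gam 1 s)).
  split; intros Hn Z; apply Hn; [rewrite Z; apply sqrt_0 | apply sqrt_eq_0; auto].
Qed.

Lemma ex_derive_ksq s : I s -> ex_derive ksq s.
Proof.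
  intros Hs. apply (smooth_ex_derive I); auto.
  assert (HI := open_inI lo hi).
  pose proof (nabfr_smooth a b gam I HI lam_neq0 gam_smooth 1 0 ltac:(lia)).
  pose proof (nabfr_smooth a b gam I HI lam_neq0 gam_smooth 1 1 ltac:(lia)).
  pose proof (nabfr_smooth a b gam I HI lam_neq0 gam_smooth 1 2 ltac:(lia)).
  unfold dot. smooth_tac.
Qed.

(* Where [kappa <> 0] the curve is locally a helix, so [kappa^2] is locally
   constant; where [kappa = 0], [kappa^2] is minimal. *)
Lemma is_derive_ksq (HD : 4 * a <> b ^ 2) s : I s -> is_derive ksq s 0.
Proof.
  intros Hs. assert (Ex := ex_derive_ksq s Hs).
  enough (Dg : Derive ksq s = 0) by (rewrite <- Dg; apply Derive_correct; exact Ex).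
  destruct (Rle_lt_or_eq_dec _ _ (dot_self_ge0 (nabfr a b gam 1 s))) as [Hp|Hz].
  - assert (Hloc : locally s (fun x => I x /\ ksq x <> 0)).
    { apply filter_and; [apply (open_inI lo hi); auto|].
      apply locally_neq0; [|lra]. apply (@ex_derive_continuous R_AbsRing R_NormedModule). exact Ex. }
    destruct Hloc as [eps Heps].
    set (lo' := Finite (s - eps)). set (hi' := Finite (s + eps)).
    assert (Hball : forall y, inI lo' hi' y -> I y /\ ksq y <> 0).
    { intros y [Y1 Y2]. apply Heps. simpl in Y1, Y2.
      unfold ball; simpl. unfold AbsRing_ball, abs, minus, plus, opp; simpl. apply Rabs_def1; lra. }
    assert (HJI : forall y, inI lo' hi' y -> I y) by (intros y Hy; apply Hball; auto).
    assert (Hnz : forall y, inI lo' hi' y -> curv a b gam y <> 0)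
      by (intros y Hy; destruct (Hball y Hy); apply curv_neq0_ksq; auto).
    assert (Hs' : inI lo' hi' s) by (split; simpl; destruct eps; simpl; lra).
    destruct (helix_on_interval lo' hi' HJI Hnz HD s Hs') as [k0 [c [Hk0 [Hall _]]]].
    apply (Derive_locally_const (inI lo' hi') ksq (k0 ^ 2) (open_inI lo' hi')); auto.
    intros y Hy. destruct (Hall y Hy) as [Cy _]. rewrite curv_sqrt_ksq in Cy by auto.
    rewrite <- Cy, pow2_sqrt; auto. apply dot_self_ge0.
  - rewrite <- (Derive_Reals ksq s (ex_derive_Reals_0 ksq s Ex)).
    apply (deriv_minimum ksq (s - 1) (s + 1) s); try lra.
    intros x _ _. rewrite <- Hz. apply dot_self_ge0.
Qed.

Lemma geodesic_of_curv_eq0 : (forall s, I s -> curv a b gam s = 0) -> geodesic a b lo hi gam.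
Proof.
  intros H0 s Hs l Hl.
  assert (Z : ksq s = 0) by (apply NNPP; rewrite <- curv_neq0_ksq by auto; auto).
  assert (W : forall i, (i < 3)%nat -> nabfr a b gam 1 s i = 0).
  { intros i Hi. unfold dot in Z.
    destruct i as [|[|[|i]]]; try lia; nra. }
  rewrite (nabT_fromframe a b gam I (open_inI lo hi) lam_neq0 gam_smooth 1 s Hs l Hl).
  destruct l as [|[|[|l]]]; try lia; unfold fromframe; rewrite ?W by lia; ring.
Qed.

Lemma geodesic_or_helix (HD : 4 * a <> b ^ 2) :
  geodesic a b lo hi gam \/
  exists k0 c, 0 < k0 /\ (forall s, I s -> curv a b gam s = k0) /\ (forall s, I s -> tors a b gam s = 0) /\
    (forall s, I s -> B3 a b gam s = c) /\ k0 ^ 2 = 2 * (b ^ 2 / 4 + (4 * a - b ^ 2) * c ^ 2) /\ c <> 0.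
Proof.
  destruct (classic (exists s0, I s0 /\ curv a b gam s0 <> 0)) as [[s0 [Hs0 Hn0]] | Hno].
  - right.
    assert (Hnz : forall s, I s -> curv a b gam s <> 0).
    { intros s Hs. apply curv_neq0_ksq; auto.
      rewrite (inI_derive0_const lo hi ksq (is_derive_ksq HD) s s0 Hs Hs0).
      apply curv_neq0_ksq; auto. }
    destruct (helix_on_interval lo hi (fun s Hs => Hs) Hnz HD s0 Hs0) as [k0 [c [Hk0 [Hall [Hrel Hc]]]]].
    exists k0, c. repeat split; auto; intros s Hs; try apply Hall; auto.
  - left. apply geodesic_of_curv_eq0. intros s Hs. apply NNPP. intro N. apply Hno. exists s. auto.
Qed.

End Curve_in_BCV.

Lemma helix_B3_bound a b k0 c : 0 < k0 -> k0 ^ 2 = 2 * (b ^ 2 / 4 + (4 * a - b ^ 2) * c ^ 2) ->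
  b ^ 2 > 4 * a -> c ^ 2 < b ^ 2 / (4 * (b ^ 2 - 4 * a)).
Proof.
  intros Hk0 Hrel Hgt.
  assert (Hk2 : 0 < k0 ^ 2) by (apply pow_lt; lra).
  apply (Rmult_lt_reg_r (4 * (b ^ 2 - 4 * a))); [lra|].
  unfold Rdiv. rewrite Rmult_assoc, Rinv_l by lra. lra.
Qed.

Theorem theorem4p6 :
  (forall (a b : R) (lo hi : Rbar) (gam : R -> vec),
     4 * a <> b ^ 2 ->
     arclength_curve a b lo hi gam ->
     triharmonic a b lo hi gam ->
     zero_torsion a b lo hi gam ->
     geodesic a b lo hi gam \/
     exists k0 c : R,
       0 < k0 /\
       (forall s, inI lo hi s -> curv a b gam s = k0) /\
       (forall s, inI lo hi s -> tors a b gam s = 0) /\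
       (forall s, inI lo hi s -> B3 a b gam s = c) /\
       k0 ^ 2 = 2 * (b ^ 2 / 4 + (4 * a - b ^ 2) * c ^ 2) /\
       (b ^ 2 > 4 * a -> c ^ 2 < b ^ 2 / (4 * (b ^ 2 - 4 * a))) /\
       (b ^ 2 < 4 * a -> c <> 0)) /\
  (forall (a : R) (lo hi : Rbar) (gam : R -> vec),
     a < 0 ->
     arclength_curve a 0 lo hi gam ->
     triharmonic a 0 lo hi gam ->
     zero_torsion a 0 lo hi gam ->
     geodesic a 0 lo hi gam).
Proof.
  split.
  - intros a b lo hi gam HD Harc Htri Hzt.
    destruct (geodesic_or_helix a b lo hi gam Harc Htri Hzt HD)
      as [G | [k0 [c [Hk0 [Hcurv [Htors [HB3 [Hrel Hc]]]]]]]]; [left; exact G|].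
    right. exists k0, c. repeat split; auto.
    intros Hgt. exact (helix_B3_bound a b k0 c Hk0 Hrel Hgt).
  - intros a lo hi gam Ha Harc Htri Hzt.
    destruct (geodesic_or_helix a 0 lo hi gam Harc Htri Hzt ltac:(intro; lra))
      as [G | [k0 [c [Hk0 [_ [_ [_ [Hrel _]]]]]]]]; [exact G|].
    exfalso. assert (0 < k0 ^ 2) by (apply pow_lt; lra). nra.
Qed.
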